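(* The set $\mathcal M^o$ of isomorphism classes of connected open projective curves (disregarding orientation) is countable: $$\mathcal M^o=\{\infty,H\}\cup\tfrac12\mathbb N^*,$$ where $\infty$ corresponds to $\widetilde{\mathbb{RP}}^1=\mathbb R$, $H$ represents the isomorphism class of any half-line in $\mathbb R$, and each $x\in\frac12\mathbb N^*$ represents the isomorphism class of a bounded interval in $\mathbb R$ of winding number $x$; that is, every connected open projective curve is isomorphic to exactly one of these models, and these are pairwise non-isomorphic.
   Context: A projective structure on a curve $C$ is an atlas of real-valued charts whose transition maps are locally restrictions of homographies $x\mapsto\frac{ax+b}{cx+d}$, $\begin{pmatrix}a&b\\c&d\end{pmatrix}\in GL(2,\mathbb R)$; an isomorphism of projective curves is a diffeomorphism given in charts by homographies (orientation may be reversed). An open projective curve is a projective curve diffeomorphic to $\mathbb R$. Let $\pi:\mathbb R\to\mathbb{RP}^1$, $\pi(t)=[\cos t:\sin t]$; $\mathbb R$ (denoted $\widetilde{\mathbb{RP}}^1$) and each of its open intervals carry the projective structure pulled back by $\pi$ (charts: local inverses of homography-charts composed with $\pi$, e.g. $t\mapsto\cot t$ on $(k\pi,(k+1)\pi)$). Winding number of a bounded interval: for $a<b$, $W((a,b))=k$ if $b=a+k\pi$, $k\in\mathbb N$, and $W((a,b))=k+\frac12$ if $a+k\pi<b<a+(k+1)\pi$, $k\in\mathbb N$. Here $\frac12\mathbb N^*=\{\frac12,1,\frac32,2,\dots\}$. *)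

From Stdlib Require Import Reals Lra ZArith.
From Coquelicot Require Import Coquelicot.
Open Scope R_scope.

(* A subset of the real line (the carrier of a curve, an open interval). *)
Definition subsetR := R -> Prop.

(* A chart: an open domain U and a real-valued coordinate phi (meaningful on U). *)
Definition chart := (subsetR * (R -> R))%type.

Definition atlas := chart -> Prop.

(* (U, phi) is a topological chart of the curve with carrier D:
   U open, U included in D, phi continuous and injective on U
   (hence a homeomorphism onto an open subset of R). *)
Definition is_chart (D U : subsetR) (phi : R -> R) : Prop :=
  open U /\ (forall x, U x -> D x) /\
  (forall x, U x -> continuous phi x) /\
  (forall x y, U x -> U y -> phi x = phi y -> x = y).

Definition loc_homog (W : subsetR) (phi psi : R -> R) : Prop :=
  forall x, W x ->
    exists e : R, 0 < e /\
    exists a b c d : R, a * d - b * c <> 0 /\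
      forall y, W y -> Rabs (y - x) < e ->
        c * phi y + d <> 0 /\ psi y = (a * phi y + b) / (c * phi y + d).

Definition is_proj_atlas (D : subsetR) (A : atlas) : Prop :=
  (forall U phi, A (U, phi) -> is_chart D U phi) /\
  (forall x, D x -> exists U phi, A (U, phi) /\ U x) /\
  (forall U phi V psi, A (U, phi) -> A (V, psi) ->
     loc_homog (fun y => U y /\ V y) phi psi).

(* Isomorphism of projective curves (D1,A1) -> (D2,A2): a homeomorphism f
   (inverse g) which in charts is given by homographies; orientation may be
   reversed. *)
Definition proj_iso (D1 : subsetR) (A1 : atlas) (D2 : subsetR) (A2 : atlas) : Prop :=
  exists f g : R -> R,
    (forall x, D1 x -> D2 (f x)) /\ (forall y, D2 y -> D1 (g y)) /\
    (forall x, D1 x -> g (f x) = x) /\ (forall y, D2 y -> f (g y) = y) /\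
    (forall x, D1 x -> continuous f x) /\ (forall y, D2 y -> continuous g y) /\
    (forall U phi V psi, A1 (U, phi) -> A2 (V, psi) ->
       loc_homog (fun y => U y /\ V (f y)) phi (fun y => psi (f y))).

(* The projective structure on D (an open subset of R) pulled back by
   pi(t) = [cos t : sin t]: charts are cot t on D /\ (k pi, (k+1) pi) and
   tan t on D /\ (k pi - pi/2, k pi + pi/2), k integer (the two affine charts
   of RP^1 composed with pi). *)
Definition std_atlas (D : subsetR) : atlas :=
  fun c => let (U, phi) := c in
    (exists k : Z,
       (forall t, U t <-> (D t /\ IZR k * PI < t < (IZR k + 1) * PI)) /\
       (forall t, U t -> phi t = cos t / sin t)) \/
    (exists k : Z,
       (forall t, U t <-> (D t /\ IZR k * PI - PI / 2 < t < IZR k * PI + PI / 2)) /\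
       (forall t, U t -> phi t = tan t)).

Definition fullR : subsetR := fun _ => True.
Definition above (a : R) : subsetR := fun t => a < t.
Definition below (b : R) : subsetR := fun t => t < b.
Definition oint (a b : R) : subsetR := fun t => a < t < b.

Definition half_nat_pos (x : R) : Prop := exists n : nat, (1 <= n)%nat /\ x = INR n / 2.

Definition winding (a b x : R) : Prop :=
  a < b /\
  ((exists k : nat, b = a + INR k * PI /\ x = INR k) \/
   (exists k : nat, a + INR k * PI < b < a + (INR k + 1) * PI /\ x = INR k + 1 / 2)).

(* A projective structure on R is, in each chart, a local homography to RP^1, and these local
   homographies glue: a projective map of the line is determined by three points, so on an interval
   a map that is locally a projective image of a nondegenerate one is globally so (rigidity).
   Continuing along R yields a developing map [h : R -> R], a lift to the universal cover
   [t |-> [cos t : sin t]] of a map that is locally a homography in every chart. It is locally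
   injective, hence monotone, and identifies the curve with its range, an open interval carrying the
   pulled-back structure: R, a half-line or a bounded interval. Translations and a reflection
   identify all half-lines; a translation composed with the lift of a shear identifies bounded
   intervals of equal winding number.
   Conversely, by rigidity an isomorphism [f] between models lifts a single projective map, so
   [f (t + PI) = f t +- PI]. Hence [f] preserves the set of [n] for which the model contains two points
   [n PI] apart, the existence of a point [t] with every [t +- n PI] in the model, and whether two
   classes mod [PI] contain no such pair; these invariants separate the models and winding numbers. *)

From Stdlib Require Import Reals Lra Lia ZArith Classical ClassicalEpsilon ClassicalDescription.
From Coquelicot Require Import Coquelicot.
Open Scope R_scope.

Lemma cont_plus (f g : R -> R) x :
  continuous f x -> continuous g x -> continuous (fun y => f y + g y) x.
Proof. intros; apply (continuous_plus f g); auto. Qed.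

Lemma cont_mult (f g : R -> R) x :
  continuous f x -> continuous g x -> continuous (fun y => f y * g y) x.
Proof. intros; apply (continuous_mult f g); auto. Qed.

Lemma cont_opp (f : R -> R) x : continuous f x -> continuous (fun y => - f y) x.
Proof. intros; apply (continuous_opp f); auto. Qed.

Lemma cont_minus (f g : R -> R) x :
  continuous f x -> continuous g x -> continuous (fun y => f y - g y) x.
Proof. intros; apply cont_plus; [|apply cont_opp]; auto. Qed.

Ltac solve_continuous :=
  repeat match goal with
  | |- continuous (fun _ => ?c) _ => apply continuous_const
  | |- continuous (fun y => y) _ => apply continuous_id
  | |- continuous (fun y => @?f y + @?g y) _ => apply (cont_plus f g)
  | |- continuous (fun y => @?f y - @?g y) _ => apply (cont_minus f g)
  | |- continuous (fun y => @?f y * @?g y) _ => apply (cont_mult f g)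
  | |- continuous (fun y => - @?f y) _ => apply (cont_opp f)
  | |- continuous (fun y => cos (@?f y)) _ => apply (continuous_cos_comp f)
  | |- continuous (fun y => sin (@?f y)) _ => apply (continuous_sin_comp f)
  | |- continuous (fun y => atan (@?f y)) _ => apply (continuous_atan_comp f)
  | |- continuous (fun y => sqrt (@?f y)) _ => apply (continuous_sqrt_comp f)
  end.

Lemma Rabs_minus_self x : Rabs (x - x) = 0.
Proof. unfold Rminus; rewrite Rplus_opp_r; apply Rabs_R0. Qed.

Lemma locally_ball_iff (x : R) (P : R -> Prop) :
  locally x P <-> exists e, 0 < e /\ forall y, Rabs (y - x) < e -> P y.
Proof.
  split.
  - intros [e He]. exists e. split; [apply cond_pos|]. intros y Hy. apply He. exact Hy.
  - intros [e [He H]]. exists (mkposreal e He). intros y Hy. apply H. exact Hy.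
Qed.

Lemma open_ball_incl (U : R -> Prop) x :
  open U -> U x -> exists e, 0 < e /\ forall y, Rabs (y - x) < e -> U y.
Proof. intros HU Hx. apply locally_ball_iff. apply HU. exact Hx. Qed.

Lemma continuous_eps (f : R -> R) x : continuous f x ->
  forall eps, 0 < eps -> exists d, 0 < d /\ forall y, Rabs (y - x) < d -> Rabs (f y - f x) < eps.
Proof.
  intros Hc eps He.
  destruct (proj1 (locally_ball_iff _ _) (proj1 (filterlim_locally f (f x)) Hc (mkposreal eps He)))
    as [d [Hd H]].
  exists d. split; [exact Hd|]. intros y Hy. apply (H y Hy).
Qed.

Lemma eps_continuous (f : R -> R) x :
  (forall eps, 0 < eps -> exists d, 0 < d /\ forall y, Rabs (y - x) < d -> Rabs (f y - f x) < eps) ->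
  continuous f x.
Proof.
  intros H. apply (proj2 (filterlim_locally f (f x))).
  intros eps. apply locally_ball_iff. destruct (H eps (cond_pos eps)) as [d [Hd H2]].
  exists d; split; [exact Hd|]. intros y Hy. apply (H2 y Hy).
Qed.

Lemma continuous_preimage_ball (f : R -> R) x (V : R -> Prop) :
  continuous f x -> open V -> V (f x) -> exists e, 0 < e /\ forall y, Rabs (y - x) < e -> V (f y).
Proof. intros Hc HV Hx. apply locally_ball_iff. apply Hc. apply HV. exact Hx. Qed.

Lemma continuous_ext_open (f g : R -> R) (I : R -> Prop) x : open I -> I x ->
  (forall y, I y -> f y = g y) -> continuous f x -> continuous g x.
Proof.
  intros HI Hx H Hc. apply (continuous_ext_loc g f x); auto.
  destruct (open_ball_incl I x HI Hx) as [e [He Hb]].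
  apply locally_ball_iff. exists e; split; auto.
Qed.

Lemma ivt_interval (f : R -> R) a b v : a <= b -> (forall t, a <= t <= b -> continuous f t) ->
  (f a <= v <= f b \/ f b <= v <= f a) -> exists c, a <= c <= b /\ f c = v.
Proof.
  intros Hab Hc Hv.
  destruct (Req_dec (f a) v) as [E|E]; [exists a; split; [lra|exact E]|].
  destruct (Req_dec (f b) v) as [E'|E']; [exists b; split; [lra|exact E']|].
  assert (Hlt : a < b) by (destruct (Req_dec a b); [subst; lra|lra]).
  assert (Hpt : forall t, a <= t <= b -> continuity_pt f t)
    by (intros t Ht; apply continuity_pt_filterlim, Hc, Ht).
  destruct Hv as [Hv|Hv].
  - destruct (Ranalysis5.IVT_interv (fun t => f t - v) a b) as [c [Hc1 Hc2]]; try lra.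
    + intros t Ht. apply continuity_pt_minus; [apply Hpt, Ht|apply continuity_pt_const; intros ? ?; reflexivity].
    + exists c; split; [exact Hc1|lra].
  - destruct (Ranalysis5.IVT_interv (fun t => v - f t) a b) as [c [Hc1 Hc2]]; try lra.
    + intros t Ht. apply continuity_pt_minus; [apply continuity_pt_const; intros ? ?; reflexivity|apply Hpt, Ht].
    + exists c; split; [exact Hc1|lra].
Qed.

Definition is_interval (I : R -> Prop) : Prop := forall x y z, I x -> I z -> x <= y <= z -> I y.

Lemma ivt_on_interval (f : R -> R) (I : R -> Prop) a b v : is_interval I -> I a -> I b ->
  (forall t, I t -> continuous f t) ->
  (f a <= v <= f b \/ f b <= v <= f a) -> exists c, I c /\ f c = v.
Proof.
  intros HI Ha Hb Hf Hv.
  destruct (Rle_dec a b) as [Hab|Hab].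
  - destruct (ivt_interval f a b v Hab) as [c [Hc E]]; auto.
    + intros t Ht. apply Hf, (HI a t b); auto.
    + exists c. split; [apply (HI a c b)|]; auto.
  - destruct (ivt_interval f b a v) as [c [Hc E]]; [lra| |tauto|].
    + intros t Ht. apply Hf, (HI b t a); auto.
    + exists c. split; [apply (HI b c a)|]; auto.
Qed.

Lemma is_interval_full : is_interval fullR.
Proof. intros x y z _ _ _. exact Logic.I. Qed.
Lemma is_interval_above a : is_interval (above a).
Proof. intros x y z Hx Hz Hy. unfold above in *. lra. Qed.
Lemma is_interval_below b : is_interval (below b).
Proof. intros x y z Hx Hz Hy. unfold below in *. lra. Qed.
Lemma is_interval_oint a b : is_interval (oint a b).
Proof. intros x y z Hx Hz Hy. unfold oint in *. lra. Qed.
Definition rball (x e : R) : R -> Prop := fun y => Rabs (y - x) < e.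

Lemma is_interval_rball x e : is_interval (rball x e).
Proof. intros a b c Ha Hc Hb. unfold rball in *. apply Rabs_def2 in Ha, Hc. apply Rabs_def1; lra. Qed.

Lemma open_rball x e : open (rball x e).
Proof.
  intros y Hy. unfold rball in *. apply locally_ball_iff. exists (e - Rabs (y - x)). split; [lra|].
  intros z Hz. assert (Rabs (z - x) <= Rabs (z - y) + Rabs (y - x)).
  { replace (z - x) with ((z - y) + (y - x)) by ring. apply Rabs_triang. }
  lra.
Qed.
Lemma is_interval_and (I J : R -> Prop) : is_interval I -> is_interval J -> is_interval (fun y => I y /\ J y).
Proof. intros HI HJ a b c [Ia Ja] [Ic Jc] Hb. split; [apply (HI a b c)|apply (HJ a b c)]; auto. Qed.

Lemma open_full : open fullR.
Proof. apply open_true. Qed.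
Lemma open_above a : open (above a).
Proof. apply open_gt. Qed.
Lemma open_below b : open (below b).
Proof. apply open_lt. Qed.
Lemma open_oint a b : open (oint a b).
Proof. apply (open_and (fun t => a < t) (fun t => t < b)); [apply open_gt|apply open_lt]. Qed.

(** * Projective linear algebra of the plane *)

Definition vec := (R * R)%type.
Definition cross (u w : vec) : R := fst u * snd w - snd u * fst w.
Definition collinear (u w : vec) : Prop := cross u w = 0.
Definition nzvec (u : vec) : Prop := ~ (fst u = 0 /\ snd u = 0).

Record mat := Mat { m11 : R; m12 : R; m21 : R; m22 : R }.
Definition mapply (M : mat) (u : vec) : vec :=
  (m11 M * fst u + m12 M * snd u, m21 M * fst u + m22 M * snd u).
Definition mdet (M : mat) : R := m11 M * m22 M - m12 M * m21 M.
Definition mmul (N M : mat) : mat :=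
  Mat (m11 N * m11 M + m12 N * m21 M) (m11 N * m12 M + m12 N * m22 M)
      (m21 N * m11 M + m22 N * m21 M) (m21 N * m12 M + m22 N * m22 M).
Definition madj (M : mat) : mat := Mat (m22 M) (- m12 M) (- m21 M) (m11 M).
Definition mat1 : mat := Mat 1 0 0 1.

Lemma cross_mapply N u w : cross (mapply N u) (mapply N w) = mdet N * cross u w.
Proof. destruct u, w, N; unfold cross, mapply, mdet; simpl; ring. Qed.
Lemma mapply_mmul N M u : mapply (mmul N M) u = mapply N (mapply M u).
Proof. destruct u, N, M; unfold mapply, mmul; simpl; f_equal; ring. Qed.
Lemma mdet_mmul N M : mdet (mmul N M) = mdet N * mdet M.
Proof. destruct N, M; unfold mdet, mmul; simpl; ring. Qed.
Lemma mdet_madj M : mdet (madj M) = mdet M.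
Proof. destruct M; unfold mdet, madj; simpl; ring. Qed.
Lemma mapply_madj M u : mapply (madj M) (mapply M u) = (mdet M * fst u, mdet M * snd u).
Proof. destruct u, M; unfold mapply, madj, mdet; simpl; f_equal; ring. Qed.
Lemma mapply_mat1 u : mapply mat1 u = u.
Proof. destruct u; unfold mapply, mat1; simpl; f_equal; ring. Qed.
Lemma mdet_mat1 : mdet mat1 = 1.
Proof. unfold mdet, mat1; simpl; ring. Qed.

Lemma collinear_refl u : collinear u u.
Proof. unfold collinear, cross; ring. Qed.

Lemma collinear_sym u w : collinear u w -> collinear w u.
Proof. unfold collinear, cross; intros; lra. Qed.

Lemma collinear_trans u w z : nzvec w -> collinear u w -> collinear w z -> collinear u z.
Proof.
  unfold collinear, nzvec, cross.
  destruct u as [u1 u2], w as [w1 w2], z as [z1 z2]; simpl; intros Hw H1 H2.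
  assert (E1 : w1 * (u1 * z2 - u2 * z1) = u1 * (w1 * z2 - w2 * z1) + z1 * (u1 * w2 - u2 * w1)) by ring.
  assert (E2 : w2 * (u1 * z2 - u2 * z1) = u2 * (w1 * z2 - w2 * z1) + z2 * (u1 * w2 - u2 * w1)) by ring.
  rewrite H1, H2 in E1, E2.
  destruct (Req_dec (u1 * z2 - u2 * z1) 0) as [E|E]; [exact E|].
  exfalso; apply Hw; split; apply (Rmult_eq_reg_r (u1 * z2 - u2 * z1)); auto; lra.
Qed.

Lemma collinear_mapply N u w : collinear u w -> collinear (mapply N u) (mapply N w).
Proof. unfold collinear; intros H; rewrite cross_mapply, H; ring. Qed.

Lemma collinear_mapply_inv N u w : mdet N <> 0 ->
  collinear (mapply N u) (mapply N w) -> collinear u w.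
Proof.
  unfold collinear; intros Hd H; rewrite cross_mapply in H.
  destruct (Rmult_integral _ _ H); [contradiction|assumption].
Qed.

Lemma nzvec_mapply M u : mdet M <> 0 -> nzvec u -> nzvec (mapply M u).
Proof.
  intros Hd Hu H. apply Hu.
  assert (E := mapply_madj M u). destruct (mapply M u) as [v1 v2]. simpl in H.
  destruct H as [-> ->]. unfold mapply, madj in E; simpl in E. injection E as E1 E2.
  split; apply (Rmult_eq_reg_l (mdet M)); auto; lra.
Qed.

Lemma nzvec_affine (a : R) : nzvec (a, 1).
Proof. unfold nzvec; simpl; lra. Qed.

Lemma collinear_madj M p q : mdet M <> 0 ->
  collinear q (mapply M p) -> collinear p (mapply (madj M) q).
Proof.
  intros Hd H. apply (collinear_mapply (madj M)) in H. rewrite mapply_madj in H.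
  unfold collinear, cross in *; simpl in *.
  apply (Rmult_eq_reg_l (mdet M)); auto. lra.
Qed.

(* Cramer's rule: the determinant of the system is the product of the three cross products. *)
Lemma binary_quadratic_three_roots (al be ga a1 b1 a2 b2 a3 b3 : R) :
  a1 * b2 - a2 * b1 <> 0 -> a1 * b3 - a3 * b1 <> 0 -> a2 * b3 - a3 * b2 <> 0 ->
  al * a1 * a1 + be * a1 * b1 + ga * b1 * b1 = 0 ->
  al * a2 * a2 + be * a2 * b2 + ga * b2 * b2 = 0 ->
  al * a3 * a3 + be * a3 * b3 + ga * b3 * b3 = 0 ->
  al = 0 /\ be = 0 /\ ga = 0.
Proof.
  intros H12 H13 H23 E1 E2 E3.
  set (r11 := a1 * a1). set (r12 := a1 * b1). set (r13 := b1 * b1).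
  set (r21 := a2 * a2). set (r22 := a2 * b2). set (r23 := b2 * b2).
  set (r31 := a3 * a3). set (r32 := a3 * b3). set (r33 := b3 * b3).
  set (Det := r11 * (r22 * r33 - r23 * r32) - r12 * (r21 * r33 - r23 * r31)
              + r13 * (r21 * r32 - r22 * r31)).
  assert (HDet : Det <> 0).
  { replace Det with ((a1 * b2 - a2 * b1) * (a1 * b3 - a3 * b1) * (a2 * b3 - a3 * b2))
      by (unfold Det, r11, r12, r13, r21, r22, r23, r31, r32, r33; ring).
    repeat apply Rmult_integral_contrapositive_currified; auto. }
  set (F1 := al * a1 * a1 + be * a1 * b1 + ga * b1 * b1) in *.
  set (F2 := al * a2 * a2 + be * a2 * b2 + ga * b2 * b2) in *.
  set (F3 := al * a3 * a3 + be * a3 * b3 + ga * b3 * b3) in *.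
  assert (A1 : al * Det = F1 * (r22 * r33 - r23 * r32) - F2 * (r12 * r33 - r13 * r32)
                          + F3 * (r12 * r23 - r13 * r22))
    by (unfold Det, F1, F2, F3, r11, r12, r13, r21, r22, r23, r31, r32, r33; ring).
  assert (A2 : be * Det = - F1 * (r21 * r33 - r23 * r31) + F2 * (r11 * r33 - r13 * r31)
                          - F3 * (r11 * r23 - r13 * r21))
    by (unfold Det, F1, F2, F3, r11, r12, r13, r21, r22, r23, r31, r32, r33; ring).
  assert (A3 : ga * Det = F1 * (r21 * r32 - r22 * r31) - F2 * (r11 * r32 - r12 * r31)
                          + F3 * (r11 * r22 - r12 * r21))
    by (unfold Det, F1, F2, F3, r11, r12, r13, r21, r22, r23, r31, r32, r33; ring).
  rewrite E1, E2, E3 in A1, A2, A3.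
  repeat split; apply (Rmult_eq_reg_r Det); auto; lra.
Qed.

(* [cross (mapply M w) (mapply N w)] is a binary quadratic form in [w] with three pairwise
   independent zeros. *)
Lemma collinear_mapply_of_three M N p1 p2 p3 :
  ~ collinear p1 p2 -> ~ collinear p1 p3 -> ~ collinear p2 p3 ->
  collinear (mapply M p1) (mapply N p1) -> collinear (mapply M p2) (mapply N p2) ->
  collinear (mapply M p3) (mapply N p3) ->
  forall w, collinear (mapply M w) (mapply N w).
Proof.
  intros H12 H13 H23 E1 E2 E3 w.
  set (al := m11 M * m21 N - m21 M * m11 N).
  set (be := m11 M * m22 N + m12 M * m21 N - m21 M * m12 N - m22 M * m11 N).
  set (ga := m12 M * m22 N - m22 M * m12 N).
  assert (Q : forall u, cross (mapply M u) (mapply N u) =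
                        al * fst u * fst u + be * fst u * snd u + ga * snd u * snd u)
    by (intros [u1 u2]; unfold cross, mapply, al, be, ga; simpl; ring).
  unfold collinear in *. rewrite Q in E1, E2, E3 |- *.
  destruct p1 as [a1 b1], p2 as [a2 b2], p3 as [a3 b3]; unfold cross in *; simpl in *.
  destruct (binary_quadratic_three_roots al be ga a1 b1 a2 b2 a3 b3) as [Ha [Hb Hg]];
    auto; try (intro; solve [apply H12; lra | apply H13; lra | apply H23; lra]).
  rewrite Ha, Hb, Hg; ring.
Qed.

Definition dir (t : R) : vec := (cos t, sin t).

Lemma nzvec_dir t : nzvec (dir t).
Proof.
  unfold nzvec, dir; simpl; intros [H1 H2]. assert (H := sin2_cos2 t).
  unfold Rsqr in H. rewrite H1, H2 in H. lra.
Qed.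

Lemma cross_dir s t : cross (dir s) (dir t) = sin (t - s).
Proof. unfold cross, dir; simpl. rewrite sin_minus. ring. Qed.

Definition cong_pi (s t : R) : Prop := exists j : Z, s - t = IZR j * PI.

Lemma cong_pi_sym s t : cong_pi s t -> cong_pi t s.
Proof. intros [j Hj]; exists (- j)%Z; rewrite opp_IZR; lra. Qed.

Lemma cong_pi_trans s t u : cong_pi s t -> cong_pi t u -> cong_pi s u.
Proof. intros [j Hj] [k Hk]; exists (j + k)%Z; rewrite plus_IZR; lra. Qed.

Lemma cong_pi_small s t : Rabs (s - t) < PI -> cong_pi s t -> s = t.
Proof.
  intros Hs [j Hj]. rewrite Hj, Rabs_mult, (Rabs_right PI) in Hs by (left; apply PI_RGT_0).
  assert (Hj1 : Rabs (IZR j) < 1) by (apply (Rmult_lt_reg_r PI); [apply PI_RGT_0|lra]).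
  rewrite <- abs_IZR in Hj1. apply lt_IZR in Hj1.
  assert (j = 0%Z) by lia. subst. simpl in Hj. lra.
Qed.

Lemma Rabs_IZR_PI_neq_half_PI (j : Z) : Rabs (IZR j * PI) <> PI / 2.
Proof.
  intros Hj. assert (HP := PI_RGT_0).
  rewrite Rabs_mult, (Rabs_right PI), <- abs_IZR in Hj by lra.
  assert (E : IZR (2 * Z.abs j) = 1) by (rewrite mult_IZR; simpl; apply (Rmult_eq_reg_r PI); lra).
  apply eq_IZR in E. lia.
Qed.

Lemma collinear_dir_iff s t : collinear (dir s) (dir t) <-> cong_pi s t.
Proof.
  unfold collinear; rewrite cross_dir. split.
  - intros H. apply sin_eq_0_0 in H. destruct H as [k Hk]. exists (- k)%Z.
    rewrite opp_IZR. lra.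
  - intros [j Hj]. replace (t - s) with (IZR (- j) * PI) by (rewrite opp_IZR; lra).
    apply sin_eq_0_1. eauto.
Qed.

Lemma continuous_neq_0_near (f : R -> R) P : continuous f P -> f P <> 0 ->
  exists d, 0 < d /\ forall y, Rabs (y - P) < d -> f y <> 0.
Proof.
  intros Hc HP. destruct (continuous_eps f P Hc (Rabs (f P))) as [d [Hd K]]; [apply Rabs_pos_lt, HP|].
  exists d. split; [exact Hd|]. intros y Hy E. specialize (K y Hy).
  rewrite E, Rminus_0_l, Rabs_Ropp in K. lra.
Qed.

(* [atan] of the quotient of the coordinates, dividing by one that does not vanish near [P]. *)
Lemma continuous_angle_near (w1 w2 : R -> R) P e0 : 0 < e0 ->
  (forall y, rball P e0 y -> continuous w1 y /\ continuous w2 y) -> ~ (w1 P = 0 /\ w2 P = 0) ->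
  exists e th, 0 < e /\ e <= e0 /\ (forall y, rball P e y -> continuous th y) /\
    (forall y, rball P e y -> collinear (dir (th y)) (w1 y, w2 y)).
Proof.
  intros He0 Hc Hnz.
  assert (HcP : continuous w1 P /\ continuous w2 P)
    by (apply Hc; unfold rball; rewrite Rabs_minus_self; exact He0).
  assert (Sub : forall d y, rball P (Rmin e0 d) y -> rball P e0 y /\ Rabs (y - P) < d)
    by (intros d y Hy; unfold rball in *;
        split; apply Rlt_le_trans with (1 := Hy); [apply Rmin_l|apply Rmin_r]).
  destruct (Req_dec (w2 P) 0) as [E2|E2].
  - destruct (continuous_neq_0_near w1 P (proj1 HcP)) as [d [Hd NZ]]; [tauto|].
    exists (Rmin e0 d), (fun y => atan (w2 y / w1 y)).
    split; [apply Rmin_pos; assumption|split; [apply Rmin_l|split]]; intros y Hy;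
      destruct (Sub d y Hy) as [Hy0 Hyd]; destruct (Hc y Hy0) as [C1 C2]; specialize (NZ y Hyd).
    + apply continuous_atan_comp, cont_mult; [exact C2|apply continuous_Rinv_comp; assumption].
    + unfold collinear, cross, dir; simpl. rewrite cos_atan, sin_atan.
      assert (0 < sqrt (1 + (w2 y / w1 y)²))
        by (apply sqrt_lt_R0; pose proof (Rle_0_sqr (w2 y / w1 y)); lra).
      field. split; lra.
  - destruct (continuous_neq_0_near w2 P (proj2 HcP)) as [d [Hd NZ]]; [exact E2|].
    exists (Rmin e0 d), (fun y => PI / 2 - atan (w1 y / w2 y)).
    split; [apply Rmin_pos; assumption|split; [apply Rmin_l|split]]; intros y Hy;
      destruct (Sub d y Hy) as [Hy0 Hyd]; destruct (Hc y Hy0) as [C1 C2]; specialize (NZ y Hyd).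
    + apply cont_minus; [apply continuous_const|].
      apply continuous_atan_comp, cont_mult; [exact C1|apply continuous_Rinv_comp; assumption].
    + unfold collinear, cross, dir; simpl. rewrite cos_shift, sin_shift, cos_atan, sin_atan.
      assert (0 < sqrt (1 + (w1 y / w2 y)²))
        by (apply sqrt_lt_R0; pose proof (Rle_0_sqr (w1 y / w2 y)); lra).
      field. split; lra.
Qed.

(** * Rigidity of locally projective maps *)

Definition loc_proj (W : R -> Prop) (p q : R -> vec) : Prop :=
  forall x, W x -> exists e, 0 < e /\ exists M, mdet M <> 0 /\
    forall y, W y -> Rabs (y - x) < e -> collinear (q y) (mapply M (p y)).

Lemma loc_proj_mono (W W' : R -> Prop) p q :
  (forall y, W' y -> W y) -> loc_proj W p q -> loc_proj W' p q.
Proof.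
  intros Hs H x Hx. destruct (H x (Hs x Hx)) as [e [He [M [HM K]]]].
  exists e; split; auto; exists M; split; auto.
Qed.

Lemma loc_proj_local (W : R -> Prop) p q :
  (forall x, W x -> exists e, 0 < e /\ loc_proj (fun y => W y /\ Rabs (y - x) < e) p q) ->
  loc_proj W p q.
Proof.
  intros H x Hx. destruct (H x Hx) as [e [He Hr]].
  destruct (Hr x) as [e' [He' [M [HM K]]]]; [split; [exact Hx|rewrite Rabs_minus_self; exact He]|].
  exists (Rmin e e'); split; [apply Rmin_pos; auto|]. exists M; split; auto.
  intros y Hy Hyx. apply K.
  - split; [exact Hy|]. apply Rlt_le_trans with (1 := Hyx), Rmin_l.
  - apply Rlt_le_trans with (1 := Hyx), Rmin_r.
Qed.

Lemma loc_proj_const (W : R -> Prop) p q M : mdet M <> 0 ->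
  (forall y, W y -> collinear (q y) (mapply M (p y))) -> loc_proj W p q.
Proof. intros HM H x Hx. exists 1; split; [lra|]. exists M; split; auto. Qed.

Lemma loc_proj_trans (W : R -> Prop) p q r : (forall y, W y -> nzvec (q y)) ->
  loc_proj W p q -> loc_proj W q r -> loc_proj W p r.
Proof.
  intros Hnz H1 H2 x Hx.
  destruct (H1 x Hx) as [e1 [He1 [M [HM K1]]]].
  destruct (H2 x Hx) as [e2 [He2 [N [HN K2]]]].
  exists (Rmin e1 e2); split; [apply Rmin_pos; auto|].
  exists (mmul N M); split; [rewrite mdet_mmul; apply Rmult_integral_contrapositive_currified; auto|].
  intros y Hy Hyx. rewrite mapply_mmul.
  assert (A1 : Rabs (y - x) < e1) by (apply Rlt_le_trans with (1 := Hyx), Rmin_l).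
  assert (A2 : Rabs (y - x) < e2) by (apply Rlt_le_trans with (1 := Hyx), Rmin_r).
  apply collinear_trans with (mapply N (q y)); [apply nzvec_mapply; auto|auto|].
  apply collinear_mapply; auto.
Qed.

Lemma loc_proj_sym (W : R -> Prop) p q : loc_proj W p q -> loc_proj W q p.
Proof.
  intros H x Hx. destruct (H x Hx) as [e [He [M [HM K]]]].
  exists e; split; auto. exists (madj M); split; [rewrite mdet_madj; auto|].
  intros y Hy Hyx. apply collinear_madj; auto.
Qed.

Definition nondegenerate (I : R -> Prop) (p : R -> vec) : Prop :=
  forall c d, c < d -> (forall y, c < y < d -> I y) ->
  exists y1 y2 y3, c < y1 < d /\ c < y2 < d /\ c < y3 < d /\
    ~ collinear (p y1) (p y2) /\ ~ collinear (p y1) (p y3) /\ ~ collinear (p y2) (p y3).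

Lemma continuation_principle (P : R -> Prop) a :
  (forall t, t <= a -> P t) ->
  (forall T, a <= T -> (forall t, t < T -> P t) -> exists e, 0 < e /\ forall t, t < T + e -> P t) ->
  forall t, P t.
Proof.
  intros Hbase Hstep t. apply NNPP; intro Nt.
  set (E := fun T => a <= T /\ forall s, s < T -> P s).
  assert (Eb : bound E).
  { exists t. intros T [_ HT]. destruct (Rle_dec T t) as [L|L]; [exact L|].
    exfalso; apply Nt, HT; lra. }
  assert (Ea : E a) by (split; [lra|intros s Hs; apply Hbase; lra]).
  destruct (completeness E Eb (ex_intro _ a Ea)) as [S [HS1 HS2]].
  assert (Below : forall s, s < S -> P s).
  { intros s Hs. apply NNPP; intro Ns. assert (S <= s); [|lra]. apply HS2. intros T [_ HT].
    destruct (Rle_dec T s) as [L|L]; [exact L|]. exfalso; apply Ns, HT; lra. }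
  destruct (Hstep S (HS1 a Ea) Below) as [e [He He']].
  assert (S + e / 2 <= S) by (apply HS1; split; [apply HS1 in Ea; lra|intros s Hs; apply He'; lra]).
  lra.
Qed.

Section Rigidity.

Variables (I : R -> Prop) (p q : R -> vec).
Hypotheses (HI : is_interval I) (Hp : forall y, I y -> nzvec (p y))
  (Hq : forall y, I y -> nzvec (q y)) (Hnd : nondegenerate I p) (Hr : loc_proj I p q).

(* Continuation: near the first point [T] not reached, the local matrix at [T] and [M0] agree on
   three pairwise non-collinear values of [p] (nondegeneracy), hence agree projectively. *)
Lemma rigidity_forward x0 M0 e0 : I x0 -> 0 < e0 ->
  (forall y, I y -> Rabs (y - x0) < e0 -> collinear (q y) (mapply M0 (p y))) ->
  forall y, I y -> x0 <= y -> collinear (q y) (mapply M0 (p y)).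
Proof.
  intros Hx0 He0 H0.
  set (P := fun t => forall y, I y -> x0 <= y <= t -> collinear (q y) (mapply M0 (p y))).
  enough (HP : forall t, P t) by (intros y Iy Hy; apply (HP y); auto; lra).
  apply (continuation_principle P (x0 + e0 / 2)).
  { intros t Ht y Iy Hy. apply H0; auto. apply Rabs_def1; lra. }
  intros T HT Below.
  destruct (classic (I T)) as [IT|NIT].
  2:{ exists 1. split; [lra|]. intros t Ht y Iy Hy. destruct (Rlt_le_dec y T) as [L|L].
      - apply (Below y); auto; lra.
      - exfalso. apply NIT, (HI x0 T y); auto; lra. }
  destruct (Hr T IT) as [e [He [MT [HMT KT]]]].
  set (c := Rmax x0 (T - e)).
  assert (Hcx : x0 <= c) by apply Rmax_l.
  assert (Hce : T - e <= c) by apply Rmax_r.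
  assert (Ic : forall y, c < y < T -> I y) by (intros y Hy; apply (HI x0 y T); auto; lra).
  destruct (Hnd c T) as [y1 [y2 [y3 [Y1 [Y2 [Y3 [N12 [N13 N23]]]]]]]];
    [unfold c; apply Rmax_lub_lt; lra|exact Ic|].
  assert (Kpar : forall y, c < y < T -> collinear (mapply MT (p y)) (mapply M0 (p y))).
  { intros y Hy. apply collinear_trans with (q y); [apply Hq, Ic, Hy| |].
    - apply collinear_sym, KT; [apply Ic, Hy|apply Rabs_def1; lra].
    - apply (Below y); [lra|apply Ic, Hy|lra]. }
  assert (U := collinear_mapply_of_three MT M0 _ _ _ N12 N13 N23
                 (Kpar y1 Y1) (Kpar y2 Y2) (Kpar y3 Y3)).
  exists e. split; [exact He|]. intros t Ht y Iy Hy.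
  destruct (Rlt_le_dec y T) as [L|L]; [apply (Below y); auto; lra|].
  apply collinear_trans with (mapply MT (p y)); [apply nzvec_mapply; auto| |apply U].
  apply KT; [exact Iy|apply Rabs_def1; lra].
Qed.

End Rigidity.

Lemma rigidity (I : R -> Prop) p q x0 :
  is_interval I -> (forall y, I y -> nzvec (p y)) -> (forall y, I y -> nzvec (q y)) ->
  nondegenerate I p -> loc_proj I p q -> I x0 ->
  exists M, mdet M <> 0 /\ forall y, I y -> collinear (q y) (mapply M (p y)).
Proof.
  intros HI Hp Hq Hnd Hr Hx0.
  destruct (Hr x0 Hx0) as [e0 [He0 [M0 [HM0 K0]]]].
  exists M0; split; [exact HM0|]. intros y Hy.
  destruct (Rle_lt_dec x0 y) as [Hle|Hlt];
    [apply (rigidity_forward I p q HI Hp Hq Hnd Hr x0 M0 e0); auto|].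
  assert (Ropp_abs : forall s t, Rabs (- s - - t) = Rabs (s - t))
    by (intros s t; replace (- s - - t) with (- (s - t)) by ring; apply Rabs_Ropp).
  replace y with (- - y) by ring.
  apply (rigidity_forward (fun t => I (- t)) (fun t => p (- t)) (fun t => q (- t)))
    with (x0 := - x0) (e0 := e0); cbv beta; rewrite ?Ropp_involutive; auto; try lra.
  - intros a b c Ha Hc Hb. apply (HI (- c) (- b) (- a)); auto; lra.
  - intros c d Hcd Hin.
    destruct (Hnd (- d) (- c)) as [y1 [y2 [y3 [Y1 [Y2 [Y3 [N12 [N13 N23]]]]]]]]; [lra| |].
    + intros t Ht. rewrite <- (Ropp_involutive t). apply Hin. lra.
    + exists (- y1), (- y2), (- y3). rewrite !Ropp_involutive. repeat split; auto; lra.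
  - intros x Hx. destruct (Hr (- x) Hx) as [e [He [M [HM K]]]].
    exists e; split; auto. exists M; split; auto.
    intros t Ht Htx. apply K; [exact Ht|]. rewrite Ropp_abs. exact Htx.
  - intros t Ht Htx. apply K0; [exact Ht|]. rewrite <- Ropp_abs, Ropp_involutive. exact Htx.
Qed.

(** * Continuous maps on intervals *)

(* [f - g] is continuous with values in [PI Z], and [|f - g|] would otherwise cross [PI/2]. *)
Lemma cong_pi_continuous_eq (f g : R -> R) (I : R -> Prop) y0 : is_interval I ->
  (forall y, I y -> continuous f y) -> (forall y, I y -> continuous g y) ->
  (forall y, I y -> cong_pi (f y) (g y)) -> I y0 -> f y0 = g y0 -> forall y, I y -> f y = g y.
Proof.
  intros HI Hf Hg Hfg H0 E0 y Hy.
  destruct (Hfg y Hy) as [j Hj].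
  destruct (Z.eq_dec j 0) as [->|Hj0]; [simpl in Hj; lra|exfalso].
  assert (Hjy : PI <= Rabs (f y - g y)).
  { rewrite Hj, Rabs_mult, (Rabs_right PI), <- abs_IZR by (left; apply PI_RGT_0).
    assert (1 <= IZR (Z.abs j)) by (apply IZR_le; lia).
    assert (HP := PI_RGT_0). nra. }
  destruct (ivt_on_interval (fun t => Rabs (f t - g t)) I y0 y (PI / 2)) as [c [Ic Ec]]; auto.
  - intros t It. apply continuous_Rabs_comp, cont_plus; [apply Hf, It|apply cont_opp, Hg, It].
  - left. rewrite E0, Rminus_diag, Rabs_R0. assert (HP := PI_RGT_0). lra.
  - destruct (Hfg c Ic) as [k Hk]. rewrite Hk in Ec. apply (Rabs_IZR_PI_neq_half_PI k), Ec.
Qed.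

Lemma cong_pi_continuous_shift (f g : R -> R) (I : R -> Prop) y0 : is_interval I ->
  (forall y, I y -> continuous f y) -> (forall y, I y -> continuous g y) ->
  (forall y, I y -> cong_pi (f y) (g y)) -> I y0 -> exists j : Z, forall y, I y -> f y = g y + IZR j * PI.
Proof.
  intros HI Hf Hg Hfg H0. destruct (Hfg y0 H0) as [j Hj]. exists j.
  apply (cong_pi_continuous_eq f (fun y => g y + IZR j * PI) I y0 HI Hf).
  - intros y Iy. apply cont_plus; [apply Hg, Iy|apply continuous_const].
  - intros y Iy. apply cong_pi_trans with (g y); [apply Hfg, Iy|exists (- j)%Z; rewrite opp_IZR; ring].
  - exact H0.
  - lra.
Qed.

Definition injective_on (I : R -> Prop) (f : R -> R) := forall x y, I x -> I y -> f x = f y -> x = y.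
Definition incr_on (I : R -> Prop) (f : R -> R) := forall x y, I x -> I y -> x < y -> f x < f y.
Definition decr_on (I : R -> Prop) (f : R -> R) := forall x y, I x -> I y -> x < y -> f y < f x.

Section ContinuousInjective.

Variables (I : R -> Prop) (f : R -> R).
Hypotheses (HI : is_interval I) (Hf : forall t, I t -> continuous f t).

(* Slide the pair (a, b) to (x, y) keeping it ordered; the difference of the values cannot
   vanish on the way. *)
Lemma injective_on_same_direction a b x y : injective_on I f ->
  I a -> I b -> I x -> I y -> a < b -> x < y -> f a < f b -> f x < f y.
Proof.
  intros Hinj Ia Ib Ix Iy Hab Hxy Hfab. apply Rnot_le_lt; intro Hfxy.
  set (u := fun s => (x - a) * s + a). set (w := fun s => (y - b) * s + b).
  assert (Iuw : forall s, 0 <= s <= 1 -> I (u s) /\ I (w s)).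
  { intros s Hs. unfold u, w. split.
    - destruct (Rle_dec a x); [apply (HI a _ x)|apply (HI x _ a)]; auto; split; nra.
    - destruct (Rle_dec b y); [apply (HI b _ y)|apply (HI y _ b)]; auto; split; nra. }
  destruct (ivt_interval (fun s => f (w s) - f (u s)) 0 1 0) as [s [Hs Es]]; [lra| |cbv beta|].
  - intros s Hs. destruct (Iuw s Hs) as [Iu Iw].
    apply cont_minus; (apply continuous_comp; [unfold u, w; solve_continuous|apply Hf; assumption]).
  - unfold u, w. rewrite !Rmult_0_r, !Rmult_1_r, !Rplus_0_l.
    replace (y - b + b) with y by ring. replace (x - a + a) with x by ring. right; lra.
  - destruct (Iuw s Hs) as [Iu Iw].
    assert (E : w s = u s) by (apply Hinj; auto; lra). unfold u, w in E.
    assert (0 <= (b - a) * (1 - s)) by (apply Rmult_le_pos; lra).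
    destruct (Req_dec s 0) as [->|Hs0]; [lra|].
    assert (0 < (y - x) * s) by (apply Rmult_lt_0_compat; lra). lra.
Qed.

Lemma injective_on_monotone : injective_on I f -> incr_on I f \/ decr_on I f.
Proof.
  intros Hinj.
  destruct (classic (exists a b, I a /\ I b /\ a < b /\ f a < f b)) as [[a [b [Ia [Ib [Hab Hfab]]]]]|N].
  - left. intros x y Ix Iy Hxy. apply (injective_on_same_direction a b); auto.
  - right. intros x y Ix Iy Hxy. assert (~ f x < f y) by (intro; apply N; eauto 10).
    assert (f x <> f y) by (intro E; apply Hinj in E; auto; lra). lra.
Qed.

Definition locally_injective_on :=
  forall x, I x -> exists e, 0 < e /\ forall y1 y2, I y1 -> I y2 ->
    Rabs (y1 - x) < e -> Rabs (y2 - x) < e -> f y1 = f y2 -> y1 = y2.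

(* At an interior maximum [m], the two sides take a common value near [m]. *)
Lemma locally_injective_no_interior_max x y m : locally_injective_on ->
  I x -> I y -> x < m < y -> ~ (forall c, x <= c <= y -> f c <= f m).
Proof.
  intros Hl Ix Iy Hm Hmax.
  assert (Im : I m) by (apply (HI x m y); auto; lra).
  destruct (Hl m Im) as [e [He Hinj]].
  set (d := Rmin (e / 2) (Rmin ((m - x) / 2) ((y - m) / 2))).
  assert (d1 : d <= e / 2) by apply Rmin_l.
  assert (d2 : d <= (m - x) / 2) by (eapply Rle_trans; [apply Rmin_r|apply Rmin_l]).
  assert (d3 : d <= (y - m) / 2) by (eapply Rle_trans; [apply Rmin_r|apply Rmin_r]).
  assert (d0 : 0 < d) by (unfold d; repeat apply Rmin_pos; lra).
  assert (Iball : forall t, m - d <= t <= m + d -> I t) by (intros t Ht; apply (HI x t y); auto; lra).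
  assert (Inj : forall t1 t2, m - d <= t1 <= m + d -> m - d <= t2 <= m + d -> f t1 = f t2 -> t1 = t2).
  { intros t1 t2 H1 H2 E. apply Hinj; auto; apply Rabs_def1; lra. }
  assert (fp : f (m - d) < f m).
  { assert (f (m - d) <= f m) by (apply Hmax; lra).
    assert (f (m - d) <> f m) by (intro E; apply Inj in E; lra). lra. }
  assert (fq : f (m + d) < f m).
  { assert (f (m + d) <= f m) by (apply Hmax; lra).
    assert (f (m + d) <> f m) by (intro E; apply Inj in E; lra). lra. }
  destruct (Rle_dec (f (m - d)) (f (m + d))).
  - destruct (ivt_interval f (m - d) m (f (m + d))) as [c [Hc E]]; [lra|intros; apply Hf, Iball; lra|lra|].
    apply Inj in E; lra.
  - destruct (ivt_interval f m (m + d) (f (m - d))) as [c [Hc E]]; [lra|intros; apply Hf, Iball; lra|lra|].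
    apply Inj in E; lra.
Qed.

Lemma locally_injective_max_at_ends x y : locally_injective_on ->
  I x -> I y -> x < y -> f x = f y -> forall c, x <= c <= y -> f c <= f x.
Proof.
  intros Hl Ix Iy Hxy E c Hc.
  destruct (continuity_ab_maj f x y) as [m [Hm1 Hm2]]; [lra| |].
  { intros t Ht. apply continuity_pt_filterlim, Hf, (HI x t y); auto. }
  destruct (Rle_dec (f m) (f x)) as [L|L]; [apply Rle_trans with (f m); auto|exfalso].
  assert (Hmi : x < m < y) by (destruct Hm2 as [[L1|L1] [L2|L2]]; subst; split; lra).
  apply (locally_injective_no_interior_max x y m Hl Ix Iy Hmi Hm1).
Qed.

End ContinuousInjective.

Lemma locally_injective_opp I f : locally_injective_on I f -> locally_injective_on I (fun t => - f t).
Proof.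
  intros Hl x Ix. destruct (Hl x Ix) as [e [He K]]. exists e; split; [exact He|].
  intros y1 y2 I1 I2 B1 B2 E. apply K; auto; lra.
Qed.

(* On [x, y] with [f x = f y], the maximum and the minimum are both [f x]: [f] is constant. *)
Lemma locally_injective_injective (I : R -> Prop) (f : R -> R) : is_interval I ->
  (forall t, I t -> continuous f t) -> locally_injective_on I f -> injective_on I f.
Proof.
  intros HI Hf Hl.
  assert (Hlt : forall x y, I x -> I y -> x < y -> f x <> f y).
  { intros x y Ix Iy Hxy E.
    assert (Hmax := locally_injective_max_at_ends I f HI Hf x y Hl Ix Iy Hxy E).
    assert (Hmin := locally_injective_max_at_ends I (fun t => - f t) HI
                      (fun t It => cont_opp f t (Hf t It)) x y (locally_injective_opp I f Hl)
                      Ix Iy Hxy ltac:(cbv beta; lra)).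
    destruct (Hl x Ix) as [e [He K]].
    set (z := x + Rmin (e / 2) (y - x) / 2).
    assert (Hz : x < z < y /\ z - x < e)
      by (unfold z; assert (H := Rmin_pos (e / 2) (y - x)); pose (Rmin_l (e / 2) (y - x));
          pose (Rmin_r (e / 2) (y - x)); split; [split|]; lra).
    assert (Ez : f z = f x) by (assert (f z <= f x) by (apply Hmax; lra);
                                  assert (- f z <= - f x) by (apply Hmin; lra); lra).
    apply K in Ez; [lra|apply (HI x z y); auto; lra|exact Ix|apply Rabs_def1; lra|
                    rewrite Rabs_minus_self; exact He]. }
  intros x y Ix Iy E.
  destruct (Rtotal_order x y) as [L|[L|L]]; [exfalso; apply (Hlt x y)|exact L|exfalso; apply (Hlt y x)]; auto.
Qed.

(** * The standard projective structures *)

Lemma INR_PI_nonneg n : 0 <= INR n * PI.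
Proof. apply Rmult_le_pos; [apply pos_INR|left; apply PI_RGT_0]. Qed.

Lemma floor_PI t : exists k : Z, IZR k * PI <= t < (IZR k + 1) * PI.
Proof.
  assert (HP := PI_RGT_0). destruct (base_Int_part (t / PI)) as [H1 H2].
  exists (Int_part (t / PI)). split.
  - apply (Rmult_le_compat_r PI) in H1; [|lra]. unfold Rdiv in H1.
    rewrite Rmult_assoc, Rinv_l, Rmult_1_r in H1; lra.
  - assert (H : t / PI < IZR (Int_part (t / PI)) + 1) by lra.
    apply (Rmult_lt_compat_r PI) in H; [|lra]. unfold Rdiv in H.
    rewrite Rmult_assoc, Rinv_l, Rmult_1_r in H; lra.
Qed.

Lemma IZR_strict_between_PI (k j : Z) : ~ (IZR k * PI < IZR j * PI < (IZR k + 1) * PI).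
Proof.
  intros H. assert (HP := PI_RGT_0).
  assert (Hkj : IZR k < IZR j < IZR (k + 1)) by (rewrite plus_IZR; split; apply (Rmult_lt_reg_r PI); lra).
  destruct Hkj as [H1 H2]. apply lt_IZR in H1, H2. lia.
Qed.

Lemma sin_neq_0_between (k : Z) t : IZR k * PI < t < (IZR k + 1) * PI -> sin t <> 0.
Proof. intros H E. apply sin_eq_0_0 in E. destruct E as [j ->]. apply (IZR_strict_between_PI k j H). Qed.

Lemma cos_neq_0_between (k : Z) t : IZR k * PI - PI / 2 < t < IZR k * PI + PI / 2 -> cos t <> 0.
Proof.
  intros H E. apply cos_eq_0_0 in E. destruct E as [j ->].
  apply (IZR_strict_between_PI (k - 1) j). rewrite minus_IZR. lra.
Qed.

Lemma std_atlas_domain D U phi : std_atlas D (U, phi) ->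
  exists c, forall t, U t <-> D t /\ c < t < c + PI.
Proof.
  intros [[k [Hk _]]|[k [Hk _]]]; [exists (IZR k * PI)|exists (IZR k * PI - PI / 2)];
    intros t; rewrite Hk; split; intros [Dt Ht]; split; auto; lra.
Qed.

Definition swap_mat : mat := Mat 0 1 1 0.

Lemma std_chart_collinear D U phi : std_atlas D (U, phi) ->
  exists S, mdet S <> 0 /\ forall t, U t -> collinear (phi t, 1) (mapply S (dir t)).
Proof.
  intros [[k [Hk Hp]]|[k [Hk Hp]]].
  - exists mat1; split; [rewrite mdet_mat1; lra|]. intros t Ht. rewrite mapply_mat1, Hp by exact Ht.
    assert (sin t <> 0) by (apply Hk in Ht; apply (sin_neq_0_between k); tauto).
    unfold collinear, cross, dir; simpl. field; auto.
  - exists swap_mat; split; [unfold mdet, swap_mat; simpl; lra|]. intros t Ht. rewrite Hp by exact Ht.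
    assert (cos t <> 0) by (apply Hk in Ht; apply (cos_neq_0_between k); tauto).
    unfold collinear, cross, dir, mapply, swap_mat, tan; simpl. field; auto.
Qed.

Lemma std_is_chart D U phi : open D -> std_atlas D (U, phi) -> is_chart D U phi.
Proof.
  intros HD Hs. destruct (std_atlas_domain D U phi Hs) as [c Hc].
  assert (HU : open U).
  { intros t Ut. apply Hc in Ut as [Dt Ht]. destruct (open_ball_incl D t HD Dt) as [e [He H]].
    apply locally_ball_iff. exists (Rmin e (Rmin (t - c) (c + PI - t))).
    split; [repeat apply Rmin_pos; lra|]. intros y Hy. apply Hc.
    assert (Rmin e (Rmin (t - c) (c + PI - t)) <= e) by apply Rmin_l.
    assert (Rmin e (Rmin (t - c) (c + PI - t)) <= t - c) by (eapply Rle_trans; [apply Rmin_r|apply Rmin_l]).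
    assert (Rmin e (Rmin (t - c) (c + PI - t)) <= c + PI - t) by (eapply Rle_trans; [apply Rmin_r|apply Rmin_r]).
    split; [apply H; lra|]. apply Rabs_def2 in Hy. lra. }
  split; [exact HU|split; [intros t Ut; apply Hc, Ut|split]].
  - intros x Ux. destruct Hs as [[k [Hk Hp]]|[k [Hk Hp]]].
    + apply (continuous_ext_open (fun t => cos t * / sin t) phi U x HU Ux); [intros y Uy; rewrite Hp; auto|].
      assert (sin x <> 0) by (apply Hk in Ux; apply (sin_neq_0_between k); tauto).
      apply cont_mult; [apply continuous_cos|apply continuous_Rinv_comp; [apply continuous_sin|auto]].
    + apply (continuous_ext_open tan phi U x HU Ux); [intros y Uy; rewrite Hp; auto|].
      apply continuous_tan. apply Hk in Ux. apply (cos_neq_0_between k); tauto.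
  - intros x y Ux Uy E. destruct (std_chart_collinear D U phi Hs) as [S [HS K]].
    apply cong_pi_small; [apply Hc in Ux, Uy; apply Rabs_def1; lra|].
    apply collinear_dir_iff, (collinear_mapply_inv S); [exact HS|].
    apply collinear_trans with (phi x, 1); [apply nzvec_affine|apply collinear_sym, K, Ux|].
    rewrite E. apply K, Uy.
Qed.

Lemma std_atlas_cover D t : D t -> exists U phi, std_atlas D (U, phi) /\ U t.
Proof.
  intros Dt. assert (HP := PI_RGT_0). destruct (floor_PI t) as [k [[Hk1|Hk1] Hk2]].
  - exists (fun s => D s /\ IZR k * PI < s < (IZR k + 1) * PI), (fun s => cos s / sin s).
    split; [left; exists k; split; [tauto|auto]|]. split; [exact Dt|lra].
  - exists (fun s => D s /\ IZR k * PI - PI / 2 < s < IZR k * PI + PI / 2), tan.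
    split; [right; exists k; split; [tauto|auto]|]. split; [exact Dt|lra].
Qed.

Lemma loc_homog_iff W phi psi :
  loc_homog W phi psi <-> loc_proj W (fun y => (phi y, 1)) (fun y => (psi y, 1)).
Proof.
  split.
  - intros H x Hx. destruct (H x Hx) as [e [He [a [b [c [d [HM K]]]]]]].
    exists e; split; [exact He|]. exists (Mat a b c d). split; [unfold mdet; simpl; exact HM|].
    intros y Hy Hyx. destruct (K y Hy Hyx) as [K1 ->]. unfold collinear, cross, mapply; simpl.
    field; exact K1.
  - intros H x Hx. destruct (H x Hx) as [e [He [[a b c d] [HM K]]]].
    unfold mdet in HM; simpl in HM.
    exists e; split; [exact He|]. exists a, b, c, d. split; [exact HM|].
    intros y Hy Hyx. specialize (K y Hy Hyx). unfold collinear, cross, mapply in K; simpl in K.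
    assert (Hden : c * phi y + d <> 0).
    { intro E. apply HM.
      replace (a * d - b * c) with (a * (c * phi y + d) - c * (a * phi y + b)) by ring.
      rewrite E. nra. }
    split; [exact Hden|]. field_simplify_eq; [lra|exact Hden].
Qed.

Lemma std_chart_loc_proj D U phi (W : R -> Prop) (f : R -> R) : std_atlas D (U, phi) ->
  (forall y, W y -> U (f y)) -> loc_proj W (fun y => dir (f y)) (fun y => (phi (f y), 1)).
Proof.
  intros Hs HW. destruct (std_chart_collinear D U phi Hs) as [S [HS K]].
  apply (loc_proj_const _ _ _ S HS). intros y Wy. apply K, HW, Wy.
Qed.

Lemma std_proj_atlas D : open D -> is_proj_atlas D (std_atlas D).
Proof.
  intros HD. split; [|split].
  - intros U phi Hs. apply std_is_chart; auto.
  - intros x Dx. apply std_atlas_cover, Dx.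
  - intros U phi V psi H1 H2. apply loc_homog_iff.
    apply loc_proj_trans with (fun y => dir y); [intros; apply nzvec_dir| |].
    + apply loc_proj_sym, (std_chart_loc_proj D U phi _ (fun y => y)); [exact H1|tauto].
    + apply (std_chart_loc_proj D V psi _ (fun y => y)); [exact H2|tauto].
Qed.

(** * Isomorphisms between the models *)

Definition homeomorphism (D1 D2 : subsetR) (f g : R -> R) : Prop :=
  (forall x, D1 x -> D2 (f x)) /\ (forall y, D2 y -> D1 (g y)) /\
  (forall x, D1 x -> g (f x) = x) /\ (forall y, D2 y -> f (g y) = y) /\
  (forall x, D1 x -> continuous f x) /\ (forall y, D2 y -> continuous g y).

(* [f] lifts, through [pi], the projective map of [RP^1] given by [M]. *)
Definition lifted_iso (D1 D2 : subsetR) (f g : R -> R) (M : mat) : Prop :=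
  homeomorphism D1 D2 f g /\ mdet M <> 0 /\
  forall x, D1 x -> collinear (dir (f x)) (mapply M (dir x)).

Lemma proj_iso_of_lifted_iso D1 D2 f g M : lifted_iso D1 D2 f g M ->
  proj_iso D1 (std_atlas D1) D2 (std_atlas D2).
Proof.
  intros [[H1 [H2 [H3 [H4 [H5 H6]]]]] [HM HL]].
  exists f, g. do 6 (split; [assumption|]).
  intros U phi V psi HU HV. apply loc_homog_iff.
  destruct (std_atlas_domain D1 U phi HU) as [c Hc].
  apply loc_proj_trans with (fun y => dir y); [intros; apply nzvec_dir| |].
  { apply loc_proj_sym, (std_chart_loc_proj D1 U phi _ (fun y => y)); [exact HU|tauto]. }
  apply loc_proj_trans with (fun y => dir (f y)); [intros; apply nzvec_dir| |].
  { apply (loc_proj_const _ _ _ M HM). intros y [Uy _]. apply HL, Hc, Uy. }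
  apply (std_chart_loc_proj D2 V psi); [exact HV|tauto].
Qed.

Lemma cos_sin_sqr t : cos t * cos t + sin t * sin t = 1.
Proof. assert (H := sin2_cos2 t). unfold Rsqr in H. lra. Qed.

Definition rot (c : R) : mat := Mat (cos c) (- sin c) (sin c) (cos c).
Definition refl (c : R) : mat := Mat (cos c) (sin c) (sin c) (- cos c).

Lemma dir_add x c : dir (x + c) = mapply (rot c) (dir x).
Proof. unfold dir, rot, mapply; simpl. rewrite cos_plus, sin_plus. f_equal; ring. Qed.
Lemma mdet_rot c : mdet (rot c) = 1.
Proof. unfold mdet, rot; simpl. rewrite <- (cos_sin_sqr c). ring. Qed.
Lemma dir_sub c x : dir (c - x) = mapply (refl c) (dir x).
Proof. unfold dir, refl, mapply; simpl. rewrite cos_minus, sin_minus. f_equal; ring. Qed.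
Lemma mdet_refl c : mdet (refl c) = -1.
Proof. unfold mdet, refl; simpl. pose proof (cos_sin_sqr c). lra. Qed.

Lemma proj_iso_translate D1 D2 c : (forall x, D1 x -> D2 (x + c)) -> (forall y, D2 y -> D1 (y - c)) ->
  proj_iso D1 (std_atlas D1) D2 (std_atlas D2).
Proof.
  intros H1 H2. apply (proj_iso_of_lifted_iso D1 D2 (fun x => x + c) (fun y => y - c) (rot c)).
  split; [repeat split; auto; intros; solve [ring|solve_continuous]|].
  split; [rewrite mdet_rot; lra|]. intros x _. rewrite dir_add. apply collinear_refl.
Qed.

Lemma proj_iso_reflect D1 D2 c : (forall x, D1 x -> D2 (c - x)) -> (forall y, D2 y -> D1 (c - y)) ->
  proj_iso D1 (std_atlas D1) D2 (std_atlas D2).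
Proof.
  intros H1 H2. apply (proj_iso_of_lifted_iso D1 D2 (fun x => c - x) (fun y => c - y) (refl c)).
  split; [repeat split; auto; intros; solve [ring|solve_continuous]|].
  split; [rewrite mdet_refl; lra|]. intros x _. rewrite dir_sub. apply collinear_refl.
Qed.

Definition dot (u w : vec) : R := fst u * fst w + snd u * snd w.
Definition vnorm (w : vec) : R := sqrt (dot w w).

Lemma vnorm_pos w : nzvec w -> 0 < vnorm w.
Proof.
  destruct w as [w1 w2]; unfold nzvec, vnorm, dot; simpl; intros Hw. apply sqrt_lt_R0.
  destruct (Req_dec w1 0) as [E|E].
  - assert (w2 * w2 > 0) by (apply Rsqr_pos_lt; tauto). nra.
  - assert (w1 * w1 > 0) by (apply Rsqr_pos_lt; exact E). nra.
Qed.

Lemma vnorm_sqr w : vnorm w * vnorm w = dot w w.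
Proof. unfold vnorm, dot. apply sqrt_sqrt. nra. Qed.

Lemma half_angle_atan x :
  cos (2 * atan x) = (1 - x * x) / (1 + x * x) /\ sin (2 * atan x) = 2 * x / (1 + x * x).
Proof.
  rewrite cos_2a, sin_2a, cos_atan, sin_atan.
  assert (Hs : 0 < sqrt (1 + x²)) by (apply sqrt_lt_R0; pose proof (Rle_0_sqr x); lra).
  assert (E : sqrt (1 + x²) * sqrt (1 + x²) = 1 + x * x)
    by (rewrite sqrt_sqrt; [unfold Rsqr; lra|pose proof (Rle_0_sqr x); lra]).
  split; [replace (1 - x * x) with (1 * 1 - x * x) by ring|]; rewrite <- E; field; lra.
Qed.

Definition lift_angle (t : R) (w : vec) : R :=
  t + 2 * atan (cross (dir t) w / (vnorm w + dot (dir t) w)).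

(* [2 atan (cross / (norm + dot))] is the angle from [dir t] to [w] (half-angle tangent formula). *)
Lemma dir_lift_angle t w : 0 < vnorm w -> 0 < vnorm w + dot (dir t) w ->
  dir (lift_angle t w) = (fst w / vnorm w, snd w / vnorm w).
Proof.
  intros HN Hd. assert (HNN := vnorm_sqr w). assert (Hc := cos_sin_sqr t).
  destruct w as [w1 w2]. unfold lift_angle, dir, dot, cross in *; simpl in *.
  set (N := vnorm (w1, w2)) in *.
  set (d := cos t * w1 + sin t * w2) in *. set (cr := cos t * w2 - sin t * w1).
  assert (E : cr * cr = N * N - d * d).
  { rewrite HNN. unfold cr, d.
    replace (w1 * w1 + w2 * w2) with ((cos t * cos t + sin t * sin t) * (w1 * w1 + w2 * w2))
      by (rewrite Hc; ring). ring. }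
  destruct (half_angle_atan (cr / (N + d))) as [C S].
  assert (Hden : 1 + cr / (N + d) * (cr / (N + d)) = 2 * N / (N + d))
    by (field_simplify_eq; [replace (cr ^ 2) with (cr * cr) by ring; rewrite E; ring|lra]).
  assert (C' : cos (2 * atan (cr / (N + d))) = d / N)
    by (rewrite C, Hden; field_simplify_eq; [replace (cr ^ 2) with (cr * cr) by ring; rewrite E; ring|lra]).
  assert (S' : sin (2 * atan (cr / (N + d))) = cr / N) by (rewrite S, Hden; field; lra).
  rewrite cos_plus, sin_plus, C', S'. unfold d, cr. f_equal; field_simplify_eq; try lra.
  - replace w1 with ((cos t * cos t + sin t * sin t) * w1) at 3 by (rewrite Hc; ring). ring.
  - replace w2 with ((cos t * cos t + sin t * sin t) * w2) at 3 by (rewrite Hc; ring). ring.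
Qed.

Definition shear (mu : R) : mat := Mat 1 mu 0 1.
Definition shear_lift (mu t : R) : R := lift_angle t (mapply (shear mu) (dir t)).

Lemma shear_dir mu t : mapply (shear mu) (dir t) = (cos t + mu * sin t, sin t).
Proof. unfold mapply, shear, dir; simpl. f_equal; ring. Qed.

Lemma vnorm_shear_dir_pos mu t : 0 < vnorm (mapply (shear mu) (dir t)).
Proof. apply vnorm_pos, nzvec_mapply; [unfold mdet, shear; simpl; lra|apply nzvec_dir]. Qed.

(* [vnorm w + dot (dir t) w] vanishes only if [w] points opposite to [dir t], which a shear never does. *)
Lemma shear_lift_denominator_pos mu t :
  0 < vnorm (mapply (shear mu) (dir t)) + dot (dir t) (mapply (shear mu) (dir t)).
Proof.
  assert (HN := vnorm_shear_dir_pos mu t). assert (HNN := vnorm_sqr (mapply (shear mu) (dir t))).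
  set (N := vnorm (mapply (shear mu) (dir t))) in *.
  rewrite shear_dir in HNN |- *. unfold dot, dir in *; simpl in *.
  assert (Hc := cos_sin_sqr t).
  set (d := cos t * (cos t + mu * sin t) + sin t * sin t).
  set (cr := cos t * sin t - sin t * (cos t + mu * sin t)).
  assert (Lag : cr * cr + d * d = N * N).
  { rewrite HNN. unfold cr, d.
    replace ((cos t + mu * sin t) * (cos t + mu * sin t) + sin t * sin t)
      with ((cos t * cos t + sin t * sin t) * ((cos t + mu * sin t) * (cos t + mu * sin t) + sin t * sin t))
      by (rewrite Hc; ring). ring. }
  destruct (Rlt_le_dec 0 (N + d)) as [L|L]; [exact L|exfalso].
  assert (Hdd : N * N <= d * d) by nra.
  assert (Hcr : cr * cr = 0) by (pose proof (Rle_0_sqr cr); unfold Rsqr in *; lra).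
  apply Rmult_integral in Hcr. assert (Hcr' : cr = 0) by tauto. clear Hcr.
  assert (Hms : mu * sin t = 0).
  { unfold cr in Hcr'. assert (E : mu * sin t * sin t = 0) by lra.
    destruct (Rmult_integral _ _ E) as [E'|E']; [exact E'|rewrite E'; ring]. }
  assert (d = 1) by (unfold d; rewrite <- Hc; replace (cos t * (cos t + mu * sin t)) with
                        (cos t * cos t + cos t * (mu * sin t)) by ring; rewrite Hms; ring).
  lra.
Qed.

Lemma dir_shear_lift mu t :
  dir (shear_lift mu t) = ((cos t + mu * sin t) / vnorm (mapply (shear mu) (dir t)),
                           sin t / vnorm (mapply (shear mu) (dir t))).
Proof.
  unfold shear_lift. rewrite dir_lift_angle; [rewrite shear_dir; reflexivity| |].
  - apply vnorm_shear_dir_pos.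
  - apply shear_lift_denominator_pos.
Qed.

Lemma collinear_dir_shear_lift mu t : collinear (dir (shear_lift mu t)) (mapply (shear mu) (dir t)).
Proof.
  assert (HN := vnorm_shear_dir_pos mu t). rewrite dir_shear_lift. rewrite shear_dir in *.
  unfold collinear, cross; cbn [fst snd]. field. lra.
Qed.

Lemma shear_lift_continuous mu t : continuous (shear_lift mu) t.
Proof.
  unfold shear_lift, lift_angle.
  apply cont_plus; [apply continuous_id|]. apply cont_mult; [apply continuous_const|].
  apply continuous_atan_comp, cont_mult.
  - unfold cross, dir, mapply, shear; cbn [fst snd m11 m12 m21 m22]. solve_continuous.
  - apply continuous_Rinv_comp; [|apply Rgt_not_eq, shear_lift_denominator_pos].
    unfold vnorm, dot, dir, mapply, shear; cbn [fst snd m11 m12 m21 m22]. solve_continuous.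
Qed.

Lemma shear_lift_close mu t : Rabs (shear_lift mu t - t) < PI.
Proof.
  unfold shear_lift, lift_angle. match goal with |- context [atan ?x] => destruct (atan_bound x) end.
  apply Rabs_def1; lra.
Qed.

Lemma shear_lift_fixed mu t : sin t = 0 -> shear_lift mu t = t.
Proof.
  intros E. unfold shear_lift, lift_angle. rewrite shear_dir. unfold cross, dir; simpl.
  rewrite E, Rmult_0_r, Rmult_0_l, Rminus_0_r. unfold Rdiv. rewrite Rmult_0_l, atan_0. ring.
Qed.

Lemma cos_sin_eq_close a b : cos a = cos b -> sin a = sin b -> Rabs (a - b) < 2 * PI -> a = b.
Proof.
  intros Hc Hs Hab. assert (HP := PI_RGT_0).
  assert (S0 : sin (a - b) = 0) by (rewrite sin_minus, Hc, Hs; ring).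
  assert (C1 : cos (a - b) = 1) by (rewrite cos_minus, Hc, Hs; apply cos_sin_sqr).
  apply sin_eq_0_0 in S0. destruct S0 as [j Hj].
  rewrite Hj, Rabs_mult, (Rabs_right PI), <- abs_IZR in Hab by lra. rewrite Hj in C1.
  assert (Hj2 : IZR (Z.abs j) < 2) by (apply (Rmult_lt_reg_r PI); lra). apply lt_IZR in Hj2.
  assert (j = 0 \/ j = 1 \/ j = -1)%Z as [E|[E|E]] by lia; subst j; simpl in *.
  - lra.
  - rewrite Rmult_1_l, cos_PI in C1. lra.
  - replace (-1 * PI) with (- PI) in C1 by ring. rewrite cos_neg, cos_PI in C1. lra.
Qed.

Lemma shear_lift_inv mu t : shear_lift (- mu) (shear_lift mu t) = t.
Proof.
  assert (HN := vnorm_shear_dir_pos mu t). assert (HN' := vnorm_shear_dir_pos (- mu) (shear_lift mu t)).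
  set (N := vnorm (mapply (shear mu) (dir t))) in *.
  set (N' := vnorm (mapply (shear (- mu)) (dir (shear_lift mu t)))) in *.
  assert (E := dir_shear_lift (- mu) (shear_lift mu t)). fold N' in E.
  assert (Es := dir_shear_lift mu t). fold N in Es. unfold dir in Es. injection Es as Ec Es.
  unfold dir in E. rewrite Ec, Es in E. injection E as E1 E2.
  assert (C1 : cos (shear_lift (- mu) (shear_lift mu t)) = / (N * N') * cos t)
    by (rewrite E1; field; lra).
  assert (C2 : sin (shear_lift (- mu) (shear_lift mu t)) = / (N * N') * sin t)
    by (rewrite E2; field; lra).
  assert (Hunit : / (N * N') = 1).
  { assert (Hp : 0 < / (N * N')) by (apply Rinv_0_lt_compat, Rmult_lt_0_compat; lra).
    assert (H1 := cos_sin_sqr (shear_lift (- mu) (shear_lift mu t))). rewrite C1, C2 in H1.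
    assert (H2 := cos_sin_sqr t). nra. }
  rewrite Hunit, Rmult_1_l in C1, C2.
  apply cos_sin_eq_close; [exact C1|exact C2|].
  assert (H1 := shear_lift_close (- mu) (shear_lift mu t)). assert (H2 := shear_lift_close mu t).
  apply Rabs_def2 in H1, H2. apply Rabs_def1; lra.
Qed.

Lemma shear_lift_incr mu : incr_on fullR (shear_lift mu).
Proof.
  assert (HP := PI_RGT_0).
  destruct (injective_on_monotone fullR (shear_lift mu)) as [I|I].
  - apply is_interval_full.
  - intros t _; apply shear_lift_continuous.
  - intros x y _ _ E. rewrite <- (shear_lift_inv mu x), <- (shear_lift_inv mu y), E. reflexivity.
  - exact I.
  - exfalso. assert (L : shear_lift mu PI < shear_lift mu 0) by (apply I; [exact Logic.I|exact Logic.I|lra]).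
    rewrite !shear_lift_fixed in L; [lra|apply sin_0|apply sin_PI].
Qed.

Lemma sin_INR_PI (k : nat) : sin (INR k * PI) = 0.
Proof. apply sin_eq_0_1. exists (Z.of_nat k). rewrite INR_IZR_INZ. reflexivity. Qed.

Lemma incr_on_full_reflect (F : R -> R) x y : incr_on fullR F -> F x < F y -> x < y.
Proof.
  intros HF H. destruct (Rtotal_order x y) as [L|[->|L]]; [exact L|lra|].
  assert (F y < F x) by (apply HF; [exact Logic.I|exact Logic.I|exact L]). lra.
Qed.

(* In the cotangent chart the shear is [x |-> x + mu]: it fixes the multiples of [PI], and this
   [mu] moves [cot L1] to [cot L2]. *)
Lemma shear_lift_hits (k : nat) L1 L2 :
  INR k * PI < L1 < (INR k + 1) * PI -> INR k * PI < L2 < (INR k + 1) * PI ->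
  shear_lift (cos L2 / sin L2 - cos L1 / sin L1) L1 = L2.
Proof.
  intros H1 H2. set (mu := cos L2 / sin L2 - cos L1 / sin L1).
  assert (Hs : forall L, INR k * PI < L < (INR k + 1) * PI -> sin L <> 0)
    by (intros L HL; apply (sin_neq_0_between (Z.of_nat k)); rewrite <- INR_IZR_INZ; exact HL).
  assert (Hk1 : shear_lift mu (INR k * PI) = INR k * PI) by apply shear_lift_fixed, sin_INR_PI.
  assert (Hk2 : shear_lift mu ((INR k + 1) * PI) = (INR k + 1) * PI)
    by (apply shear_lift_fixed; rewrite <- S_INR; apply sin_INR_PI).
  assert (Hin : INR k * PI < shear_lift mu L1 < (INR k + 1) * PI).
  { rewrite <- Hk1, <- Hk2 at 1. split; apply shear_lift_incr; solve [exact Logic.I|lra]. }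
  apply cong_pi_small; [apply Rabs_def1; lra|].
  apply collinear_dir_iff, collinear_trans with (mapply (shear mu) (dir L1)).
  - apply nzvec_mapply; [unfold mdet, shear; simpl; lra|apply nzvec_dir].
  - apply collinear_dir_shear_lift.
  - rewrite shear_dir. unfold collinear, cross, dir, mu; simpl.
    field. split; apply Hs; assumption.
Qed.

Lemma lifted_iso_oint (F G : R -> R) (M : mat) a b c d :
  (forall t, G (F t) = t) -> (forall s, F (G s) = s) -> incr_on fullR F ->
  (forall t, continuous F t) -> (forall s, continuous G s) -> F 0 = 0 -> F (b - a) = d - c ->
  mdet M <> 0 -> (forall t, collinear (dir (F t)) (mapply M (dir t))) ->
  lifted_iso (oint a b) (oint c d) (fun t => c + F (t - a)) (fun s => a + G (s - c))
    (mmul (rot c) (mmul M (rot (- a)))).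
Proof.
  intros GF FG HF CF CG F0 Fb HM HL.
  assert (Fmono : forall x y, x < y -> F x < F y) by (intros x y; apply HF; exact Logic.I).
  refine (conj (conj _ (conj _ (conj _ (conj _ (conj _ _))))) (conj _ _)).
  - intros x Hx. unfold oint in *.
    assert (F 0 < F (x - a) < F (b - a)) by (split; apply Fmono; lra). lra.
  - intros y Hy. unfold oint in *.
    assert (0 < G (y - c) < b - a); [|lra].
    split; apply (incr_on_full_reflect F _ _ HF); rewrite ?F0, ?Fb, FG; lra.
  - intros x _. replace (c + F (x - a) - c) with (F (x - a)) by ring. rewrite GF. ring.
  - intros y _. replace (a + G (y - c) - a) with (G (y - c)) by ring. rewrite FG. ring.
  - intros x _. apply cont_plus; [apply continuous_const|].
    apply (continuous_comp (fun t => t - a) F); [solve_continuous|apply CF].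
  - intros y _. apply cont_plus; [apply continuous_const|].
    apply (continuous_comp (fun t => t - c) G); [solve_continuous|apply CG].
  - rewrite !mdet_mmul, !mdet_rot. lra.
  - intros x _. rewrite !mapply_mmul, Rplus_comm, dir_add. apply collinear_mapply.
    rewrite <- dir_add. apply HL.
Qed.

Lemma proj_iso_oint_half_winding a b c d (k : nat) :
  INR k * PI < b - a < (INR k + 1) * PI -> INR k * PI < d - c < (INR k + 1) * PI ->
  proj_iso (oint a b) (std_atlas (oint a b)) (oint c d) (std_atlas (oint c d)).
Proof.
  intros H1 H2. set (mu := cos (d - c) / sin (d - c) - cos (b - a) / sin (b - a)).
  apply proj_iso_of_lifted_iso with (fun t => c + shear_lift mu (t - a))
    (fun s => a + shear_lift (- mu) (s - c)) (mmul (rot c) (mmul (shear mu) (rot (- a)))).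
  apply lifted_iso_oint.
  - apply shear_lift_inv.
  - intros s. rewrite <- (Ropp_involutive mu) at 1. apply shear_lift_inv.
  - apply shear_lift_incr.
  - apply shear_lift_continuous.
  - apply shear_lift_continuous.
  - apply shear_lift_fixed, sin_0.
  - apply (shear_lift_hits k); assumption.
  - unfold mdet, shear; simpl; lra.
  - apply collinear_dir_shear_lift.
Qed.

(** * Invariants of isomorphisms between the models *)

Definition model_carrier (D : R -> Prop) : Prop := open D /\ is_interval D /\ exists x, D x.

Lemma model_carrier_full : model_carrier fullR.
Proof. split; [apply open_full|split; [apply is_interval_full|exists 0; exact Logic.I]]. Qed.
Lemma model_carrier_above a : model_carrier (above a).
Proof. split; [apply open_above|split; [apply is_interval_above|exists (a + 1); unfold above; lra]]. Qed.
Lemma model_carrier_below b : model_carrier (below b).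
Proof. split; [apply open_below|split; [apply is_interval_below|exists (b - 1); unfold below; lra]]. Qed.
Lemma model_carrier_oint a b : a < b -> model_carrier (oint a b).
Proof.
  intros Hab. split; [apply open_oint|split; [apply is_interval_oint|exists ((a + b) / 2); unfold oint; lra]].
Qed.

Lemma nondegenerate_dir I : nondegenerate I (fun y => dir y).
Proof.
  intros c d Hcd _. assert (HP := PI_RGT_0).
  set (h := Rmin (d - c) PI / 4).
  assert (h0 : 0 < h) by (unfold h; assert (0 < Rmin (d - c) PI) by (apply Rmin_pos; lra); lra).
  assert (h1 : 4 * h <= d - c) by (unfold h; assert (Rmin (d - c) PI <= d - c) by apply Rmin_l; lra).
  assert (h2 : 4 * h <= PI) by (unfold h; assert (Rmin (d - c) PI <= PI) by apply Rmin_r; lra).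
  assert (NP : forall s t, 0 < t - s < PI -> ~ collinear (dir s) (dir t)).
  { intros s t Hst P. apply collinear_dir_iff, cong_pi_small in P; [lra|apply Rabs_def1; lra]. }
  exists (c + h), (c + 2 * h), (c + 3 * h). repeat split; try lra; apply NP; lra.
Qed.

Lemma loc_proj_dir_of_proj_iso (D1 D2 : R -> Prop) (f : R -> R) : open D1 -> open D2 ->
  (forall x, D1 x -> D2 (f x)) -> (forall x, D1 x -> continuous f x) ->
  (forall U phi V psi, std_atlas D1 (U, phi) -> std_atlas D2 (V, psi) ->
       loc_homog (fun y => U y /\ V (f y)) phi (fun y => psi (f y))) ->
  loc_proj D1 (fun y => dir y) (fun y => dir (f y)).
Proof.
  intros HD1 HD2 Hf Hc Hh. apply loc_proj_local. intros x Hx.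
  destruct (std_atlas_cover D1 x Hx) as [U [phi [HU Ux]]].
  destruct (std_atlas_cover D2 (f x) (Hf x Hx)) as [V [psi [HV Vx]]].
  destruct (std_is_chart D1 U phi HD1 HU) as [oU _].
  destruct (std_is_chart D2 V psi HD2 HV) as [oV _].
  destruct (open_ball_incl U x oU Ux) as [e1 [He1 K1]].
  destruct (continuous_preimage_ball f x V (Hc x Hx) oV Vx) as [e2 [He2 K2]].
  exists (Rmin e1 e2); split; [apply Rmin_pos; auto|].
  apply loc_proj_mono with (fun y => U y /\ V (f y)).
  { intros y [_ Hy]. split; [apply K1|apply K2]; apply Rlt_le_trans with (1 := Hy); [apply Rmin_l|apply Rmin_r]. }
  apply loc_proj_trans with (fun y => (phi y, 1)); [intros; apply nzvec_affine| |].
  { apply (std_chart_loc_proj D1 U phi _ (fun y => y)); [exact HU|tauto]. }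
  apply loc_proj_trans with (fun y => (psi (f y), 1)); [intros; apply nzvec_affine| |].
  { apply loc_homog_iff, Hh; assumption. }
  apply loc_proj_sym, (std_chart_loc_proj D2 V psi); [exact HV|tauto].
Qed.

(* By rigidity, the local projective matrices of an isomorphism glue to a single one. *)
Lemma lifted_iso_of_proj_iso D1 D2 : model_carrier D1 -> model_carrier D2 ->
  proj_iso D1 (std_atlas D1) D2 (std_atlas D2) -> exists f g M, lifted_iso D1 D2 f g M.
Proof.
  intros [o1 [c1 [x0 Hx0]]] [o2 _] [f [g [H1 [H2 [H3 [H4 [H5 [H6 H7]]]]]]]].
  assert (Hr := loc_proj_dir_of_proj_iso D1 D2 f o1 o2 H1 H5 H7).
  destruct (rigidity D1 (fun y => dir y) (fun y => dir (f y)) x0 c1) as [M [HM K]];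
    [intros; apply nzvec_dir|intros; apply nzvec_dir|apply nondegenerate_dir|exact Hr|exact Hx0|].
  exists f, g, M. split; [repeat split; assumption|split; assumption].
Qed.

Lemma lifted_iso_sym D1 D2 f g M : lifted_iso D1 D2 f g M -> lifted_iso D2 D1 g f (madj M).
Proof.
  intros [[H1 [H2 [H3 [H4 [H5 H6]]]]] [HM K]].
  split; [repeat split; assumption|split; [rewrite mdet_madj; exact HM|]].
  intros y Hy. apply collinear_madj; [exact HM|]. rewrite <- (H4 y Hy) at 1. apply K, H2, Hy.
Qed.

Lemma lifted_iso_cong_pi D1 D2 f g M t t' x : lifted_iso D1 D2 f g M ->
  collinear (dir t') (mapply M (dir t)) -> D1 x -> (cong_pi (f x) t' <-> cong_pi x t).
Proof.
  intros [_ [HM K]] Ht Hx. rewrite <- !collinear_dir_iff.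
  assert (NM : forall u, nzvec (mapply M (dir u))) by (intros; apply nzvec_mapply, nzvec_dir; exact HM).
  split; intros P.
  - apply (collinear_mapply_inv M); [exact HM|].
    apply collinear_trans with (dir (f x)); [apply nzvec_dir|apply collinear_sym, K, Hx|].
    apply collinear_trans with (dir t'); [apply nzvec_dir|exact P|exact Ht].
  - apply collinear_trans with (mapply M (dir x)); [apply NM|apply K, Hx|].
    apply collinear_trans with (mapply M (dir t)); [apply NM|apply collinear_mapply, P|].
    apply collinear_sym, Ht.
Qed.

Lemma monotone_preimage_between (I : R -> Prop) f t t' u : incr_on I f \/ decr_on I f ->
  I t -> I t' -> I u -> t < t' -> (f t < f u < f t' \/ f t' < f u < f t) -> t < u < t'.
Proof.
  intros Hm It It' Iu Htt' Hb.
  split; apply Rnot_le_lt; intros [L|L]; try (subst; lra);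
    destruct Hm as [Hm|Hm]; pose proof (Hm _ _ It It' Htt');
    [pose proof (Hm _ _ Iu It L)|pose proof (Hm _ _ Iu It L)|
     pose proof (Hm _ _ It' Iu L)|pose proof (Hm _ _ It' Iu L)]; lra.
Qed.

Section LiftedIso.

Variables (D1 D2 : R -> Prop) (f g : R -> R) (M : mat).
Hypotheses (c1 : is_interval D1) (c2 : is_interval D2) (HL : lifted_iso D1 D2 f g M).

Lemma lifted_iso_monotone : incr_on D1 f \/ decr_on D1 f.
Proof.
  destruct HL as [[_ [_ [H3 [_ [H5 _]]]]] _].
  apply injective_on_monotone; [exact c1|exact H5|].
  intros x y Hx Hy E. rewrite <- (H3 x Hx), <- (H3 y Hy), E. reflexivity.
Qed.

(* A value [s] congruent to [f t] strictly between [f t] and [f (t + PI)] would have a preimage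
   congruent to [t] strictly between [t] and [t + PI]. *)
Lemma lifted_iso_step_PI t : D1 t -> D1 (t + PI) -> Rabs (f (t + PI) - f t) = PI.
Proof.
  intros Ht Ht'. assert (HP := PI_RGT_0).
  destruct HL as [[H1 [H2 [H3 [H4 _]]]] [_ K]].
  assert (NoMid : forall s, D2 s -> (f t < s < f (t + PI) \/ f (t + PI) < s < f t) -> ~ cong_pi s (f t)).
  { intros s Hs Hb C. rewrite <- (H4 s Hs) in C, Hb.
    apply (lifted_iso_cong_pi D1 D2 f g M t (f t) (g s) HL (K t Ht) (H2 s Hs)) in C.
    assert (Hu := monotone_preimage_between D1 f t (t + PI) (g s) lifted_iso_monotone
                    Ht Ht' (H2 s Hs) ltac:(lra) Hb).
    apply cong_pi_small in C; [lra|apply Rabs_def1; lra]. }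
  destruct (proj2 (lifted_iso_cong_pi D1 D2 f g M t (f t) (t + PI) HL (K t Ht) Ht'))
    as [j Hj]; [exists 1%Z; simpl; ring|].
  assert (Hf1 : forall k : Z, cong_pi (f t + IZR k * PI) (f t)) by (intros k; exists k; ring).
  destruct (Z_lt_le_dec 1 j) as [L|L]; [|destruct (Z_lt_le_dec j (-1)) as [L'|L']].
  - exfalso. assert (2 <= IZR j) by (apply IZR_le; lia).
    apply (NoMid (f t + 1 * PI)); [apply (c2 (f t) _ (f (t + PI))); auto; nra|left; nra|apply Hf1].
  - exfalso. assert (IZR j <= -2) by (apply IZR_le; lia).
    apply (NoMid (f t + -1 * PI)); [apply (c2 (f (t + PI)) _ (f t)); auto; nra|right; nra|apply Hf1].
  - assert (j = 0 \/ j = 1 \/ j = -1)%Z as [E|[E|E]] by lia; subst j; simpl in Hj.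
    + exfalso. assert (E : f (t + PI) = f t) by lra.
      assert (t + PI = t) by (rewrite <- (H3 _ Ht'), E, (H3 _ Ht); reflexivity). lra.
    + rewrite Hj, Rmult_1_l, Rabs_right; lra.
    + rewrite Hj, Rabs_left; lra.
Qed.

Lemma lifted_iso_shift : exists sg, (sg = 1 \/ sg = -1) /\
  forall t n, D1 t -> D1 (t + INR n * PI) -> f (t + INR n * PI) = f t + sg * (INR n * PI).
Proof.
  assert (HP := PI_RGT_0).
  assert (Mid : forall t n, D1 t -> D1 (t + INR (S n) * PI) -> D1 (t + INR n * PI)).
  { intros t n Ht Hn. apply (c1 t _ (t + INR (S n) * PI)); auto. rewrite S_INR.
    assert (Hn' := INR_PI_nonneg n). lra. }
  assert (Step : forall sg, (forall t, D1 t -> D1 (t + PI) -> f (t + PI) = f t + sg * PI) ->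
            forall t n, D1 t -> D1 (t + INR n * PI) -> f (t + INR n * PI) = f t + sg * (INR n * PI)).
  { intros sg Hsg t n; induction n as [|n IH]; intros Ht Hn.
    - simpl. rewrite Rmult_0_l, !Rmult_0_r, !Rplus_0_r. reflexivity.
    - assert (Dn := Mid t n Ht Hn).
      replace (t + INR (S n) * PI) with (t + INR n * PI + PI) in * by (rewrite S_INR; ring).
      rewrite Hsg, IH by assumption. rewrite S_INR. ring. }
  destruct lifted_iso_monotone as [I|I]; [exists 1|exists (-1)]; (split; [lra|]); apply Step;
    intros t Ht Ht'; assert (E := lifted_iso_step_PI t Ht Ht');
    [assert (f t < f (t + PI)) by (apply I; auto; lra); rewrite Rabs_right in E
    |assert (f (t + PI) < f t) by (apply I; auto; lra); rewrite Rabs_left in E]; lra.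
Qed.

Lemma lifted_iso_pair t n : D1 t -> D1 (t + INR n * PI) ->
  exists s, D2 s /\ D2 (s + INR n * PI) /\ cong_pi s (f t).
Proof.
  intros Ht Htn. destruct lifted_iso_shift as [sg [[->| ->] Hsh]]; specialize (Hsh t n Ht Htn);
    destruct HL as [[H1 _] _].
  - exists (f t). split; [apply H1, Ht|split; [|exists 0%Z; simpl; ring]].
    replace (f t + INR n * PI) with (f (t + INR n * PI)) by (rewrite Hsh; ring). apply H1, Htn.
  - exists (f (t + INR n * PI)). split; [apply H1, Htn|split].
    + rewrite Hsh. replace (f t + -1 * (INR n * PI) + INR n * PI) with (f t) by ring. apply H1, Ht.
    + exists (- Z.of_nat n)%Z. rewrite Hsh, opp_IZR, <- INR_IZR_INZ. ring.
Qed.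

Lemma lifted_iso_orbit t : D1 t -> (forall n, D1 (t + INR n * PI) /\ D1 (t - INR n * PI)) ->
  forall n, D2 (f t + INR n * PI) /\ D2 (f t - INR n * PI).
Proof.
  intros Ht Hor n. destruct lifted_iso_shift as [sg [Hsg Hsh]].
  destruct (Hor n) as [Hp Hm]. destruct HL as [[H1 _] _].
  assert (Ep := Hsh t n Ht Hp).
  assert (Em := Hsh (t - INR n * PI) n Hm ltac:(replace (t - INR n * PI + INR n * PI) with t by ring; exact Ht)).
  replace (t - INR n * PI + INR n * PI) with t in Em by ring.
  destruct Hsg as [->| ->].
  - split; [replace (f t + INR n * PI) with (f (t + INR n * PI)) by (rewrite Ep; ring); apply H1, Hp|].
    replace (f t - INR n * PI) with (f (t - INR n * PI)) by lra. apply H1, Hm.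
  - split; [replace (f t + INR n * PI) with (f (t - INR n * PI)) by lra; apply H1, Hm|].
    replace (f t - INR n * PI) with (f (t + INR n * PI)) by lra. apply H1, Hp.
Qed.

End LiftedIso.

Lemma exists_nat_PI_gt X : exists n : nat, X < INR n * PI.
Proof.
  destruct (floor_PI X) as [k [_ Hk]]. exists (Z.to_nat (Z.abs k + 1)).
  rewrite INR_IZR_INZ, Z2Nat.id by lia. rewrite plus_IZR, abs_IZR. simpl.
  apply Rlt_le_trans with (1 := Hk), Rmult_le_compat_r; [left; apply PI_RGT_0|].
  assert (IZR k <= Rabs (IZR k)) by apply Rle_abs. lra.
Qed.

Definition spans (n : nat) (D : R -> Prop) : Prop := exists s, D s /\ D (s + INR n * PI).

Lemma spans_proj_iso D1 D2 n : model_carrier D1 -> model_carrier D2 ->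
  proj_iso D1 (std_atlas D1) D2 (std_atlas D2) -> spans n D1 -> spans n D2.
Proof.
  intros HD1 HD2 Hiso [s [Hs Hsn]].
  destruct (lifted_iso_of_proj_iso D1 D2 HD1 HD2 Hiso) as [f [g [M HL]]].
  destruct (lifted_iso_pair D1 D2 f g M (proj1 (proj2 HD1)) (proj1 (proj2 HD2)) HL s n Hs Hsn)
    as [s' [H1 [H2 _]]].
  exists s'. split; assumption.
Qed.

Lemma spans_oint a b n : spans n (oint a b) <-> INR n * PI < b - a.
Proof.
  assert (Hnpi := INR_PI_nonneg n).
  unfold spans, oint. split.
  - intros [s [H1 H2]]. lra.
  - intros Hn. exists (a + (b - a - INR n * PI) / 2). split; split; lra.
Qed.

Lemma spans_full n : spans n fullR.
Proof. exists 0. split; exact Logic.I. Qed.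
Lemma spans_above a n : spans n (above a).
Proof.
  exists (a + 1). unfold above.
  assert (Hnpi := INR_PI_nonneg n).
  split; lra.
Qed.
Lemma spans_below b n : spans n (below b).
Proof.
  exists (b - 1 - INR n * PI). unfold below.
  assert (Hnpi := INR_PI_nonneg n).
  split; lra.
Qed.

Lemma not_proj_iso_oint_of_spans D c d : model_carrier D -> c < d -> (forall n, spans n D) ->
  ~ proj_iso D (std_atlas D) (oint c d) (std_atlas (oint c d)).
Proof.
  intros HD Hcd Hsp Hiso. destruct (exists_nat_PI_gt (d - c)) as [n Hn].
  apply (spans_proj_iso D (oint c d) n HD (model_carrier_oint c d Hcd) Hiso), spans_oint in Hsp.
  lra.
Qed.

Lemma not_proj_iso_full_half D : model_carrier D ->
  (forall u, exists n, ~ (D (u + INR n * PI) /\ D (u - INR n * PI))) ->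
  ~ proj_iso fullR (std_atlas fullR) D (std_atlas D).
Proof.
  intros HD Hbd Hiso.
  destruct (lifted_iso_of_proj_iso fullR D model_carrier_full HD Hiso) as [f [g [M HL]]].
  destruct (Hbd (f 0)) as [n Hn]. apply Hn.
  apply (lifted_iso_orbit fullR D f g M is_interval_full (proj1 (proj2 HD)) HL);
    [exact Logic.I|split; exact Logic.I].
Qed.

Lemma above_not_two_sided a u : exists n, ~ (above a (u + INR n * PI) /\ above a (u - INR n * PI)).
Proof.
  destruct (exists_nat_PI_gt (u - a)) as [n Hn]. exists n. unfold above. lra.
Qed.

Lemma below_not_two_sided b u : exists n, ~ (below b (u + INR n * PI) /\ below b (u - INR n * PI)).
Proof.
  destruct (exists_nat_PI_gt (b - u)) as [n Hn]. exists n. unfold below. lra.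
Qed.

Definition class_spans (n : nat) (D : R -> Prop) (t : R) : Prop :=
  exists s, D s /\ D (s + INR n * PI) /\ cong_pi s t.

Definition two_classes_missed (n : nat) (D : R -> Prop) : Prop :=
  exists t1 t2, ~ cong_pi t1 t2 /\ ~ class_spans n D t1 /\ ~ class_spans n D t2.

Lemma class_spans_lifted_iso D1 D2 f g M n t t' : is_interval D1 -> is_interval D2 ->
  lifted_iso D1 D2 f g M -> collinear (dir t') (mapply M (dir t)) ->
  class_spans n D2 t' -> class_spans n D1 t.
Proof.
  intros c1 c2 HL Ht [s' [H1 [H2 C]]].
  destruct (lifted_iso_pair D2 D1 g f (madj M) c2 c1 (lifted_iso_sym D1 D2 f g M HL) s' n H1 H2)
    as [s [Hs [Hsn Cs]]].
  exists s. split; [exact Hs|split; [exact Hsn|]].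
  apply cong_pi_trans with (g s'); [exact Cs|].
  assert (HL' := HL). destruct HL' as [[_ [Hg [_ [Hfg _]]]] _].
  apply (lifted_iso_cong_pi D1 D2 f g M t t' (g s') HL Ht (Hg s' H1)). rewrite Hfg by exact H1. exact C.
Qed.

Lemma angle_exists (w : vec) : nzvec w -> exists th, collinear (dir th) w.
Proof.
  intros Hw. destruct (continuous_angle_near (fun _ => fst w) (fun _ => snd w) 0 1) as [e [th [He [_ [_ K]]]]];
    [lra|intros; split; apply continuous_const|exact Hw|].
  exists (th 0). rewrite (surjective_pairing w). apply K. unfold rball. rewrite Rabs_minus_self. exact He.
Qed.

Lemma two_classes_missed_proj_iso D1 D2 n : model_carrier D1 -> model_carrier D2 ->
  proj_iso D1 (std_atlas D1) D2 (std_atlas D2) -> two_classes_missed n D1 -> two_classes_missed n D2.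
Proof.
  intros HD1 HD2 Hiso [t1 [t2 [N [B1 B2]]]].
  destruct (lifted_iso_of_proj_iso D1 D2 HD1 HD2 Hiso) as [f [g [M HL]]].
  assert (HM : mdet M <> 0) by apply HL.
  destruct (angle_exists (mapply M (dir t1))) as [u1 Hu1]; [apply nzvec_mapply, nzvec_dir; exact HM|].
  destruct (angle_exists (mapply M (dir t2))) as [u2 Hu2]; [apply nzvec_mapply, nzvec_dir; exact HM|].
  assert (c1 := proj1 (proj2 HD1)). assert (c2 := proj1 (proj2 HD2)).
  exists u1, u2. split; [|split; intro C].
  2:{ apply B1, (class_spans_lifted_iso D1 D2 f g M n t1 u1 c1 c2 HL Hu1 C). }
  2:{ apply B2, (class_spans_lifted_iso D1 D2 f g M n t2 u2 c1 c2 HL Hu2 C). }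
  intro C. apply N, collinear_dir_iff, (collinear_mapply_inv M); [exact HM|].
  apply collinear_dir_iff in C.
  apply collinear_trans with (dir u1); [apply nzvec_dir|apply collinear_sym, Hu1|].
  apply collinear_trans with (dir u2); [apply nzvec_dir|exact C|exact Hu2].
Qed.

(* Only the class of [a] has no pair [s, s + m PI] inside an interval of length [(m + 1) PI]. *)
Lemma not_two_classes_missed_oint_int a m : ~ two_classes_missed m (oint a (a + INR (S m) * PI)).
Proof.
  assert (HP := PI_RGT_0). assert (Hmpi := INR_PI_nonneg m).
  rewrite S_INR.
  assert (Key : forall t, ~ class_spans m (oint a (a + (INR m + 1) * PI)) t -> cong_pi t a).
  { intros t Hb. apply NNPP. intro N. apply Hb.
    destruct (floor_PI (t - a)) as [j [Hj1 Hj2]].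
    assert (Ha : t - IZR j * PI <> a) by (intro E; apply N; exists j; lra).
    exists (t - IZR j * PI). unfold oint. split; [lra|split; [lra|]].
    exists (- j)%Z. rewrite opp_IZR. ring. }
  intros [t1 [t2 [N [B1 B2]]]]. apply N, cong_pi_trans with a; [apply Key, B1|apply cong_pi_sym, Key, B2].
Qed.

(* The classes in [[b - k PI, a + PI)] have no such pair. *)
Lemma two_classes_missed_oint_half a b k : INR k * PI < b - a < (INR k + 1) * PI ->
  two_classes_missed k (oint a b).
Proof.
  intros Hk. assert (HP := PI_RGT_0).
  set (t1 := b - INR k * PI). set (t2 := (t1 + a + PI) / 2).
  assert (Miss : forall t, t1 <= t < a + PI -> ~ class_spans k (oint a b) t).
  { intros t Ht [s [Hs [Hs2 [j Hj]]]]. unfold oint in *.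
    assert (Hj1 : -1 < IZR j) by (apply (Rmult_lt_reg_r PI); lra).
    assert (0 <= IZR j) by (apply IZR_le; apply lt_IZR in Hj1; lia).
    assert (0 <= IZR j * PI) by nra. unfold t1 in Ht. lra. }
  exists t1, t2. split; [|split; apply Miss; unfold t2, t1; lra].
  intro C. apply cong_pi_sym, cong_pi_small in C; [unfold t2, t1 in C; lra|].
  apply Rabs_def1; unfold t2, t1; lra.
Qed.

Lemma proj_iso_models_sym D1 D2 : model_carrier D1 -> model_carrier D2 ->
  proj_iso D1 (std_atlas D1) D2 (std_atlas D2) -> proj_iso D2 (std_atlas D2) D1 (std_atlas D1).
Proof.
  intros HD1 HD2 Hiso. destruct (lifted_iso_of_proj_iso D1 D2 HD1 HD2 Hiso) as [f [g [M HL]]].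
  apply (proj_iso_of_lifted_iso D2 D1 g f (madj M)), lifted_iso_sym, HL.
Qed.

Lemma INR_PI_lt_iff m n : INR m * PI < INR n * PI <-> (m < n)%nat.
Proof.
  assert (HP := PI_RGT_0). split; intros H.
  - apply INR_lt, (Rmult_lt_reg_r PI); assumption.
  - apply Rmult_lt_compat_r, lt_INR; assumption.
Qed.

Lemma spans_oint_int a k n : spans n (oint a (a + INR k * PI)) <-> (n < k)%nat.
Proof. rewrite spans_oint, <- INR_PI_lt_iff. replace (a + INR k * PI - a) with (INR k * PI) by ring. tauto. Qed.

Lemma spans_oint_half a b k n : INR k * PI < b - a < (INR k + 1) * PI ->
  (spans n (oint a b) <-> (n <= k)%nat).
Proof.
  intros Hk. rewrite spans_oint. rewrite <- S_INR in Hk. split; intros H.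
  - assert (Hnk : INR n * PI < INR (S k) * PI) by lra. apply INR_PI_lt_iff in Hnk. lia.
  - destruct (proj1 (Nat.lt_eq_cases _ _) H) as [L| ->]; [apply INR_PI_lt_iff in L|]; lra.
Qed.

Lemma winding_unique a b c d x y : winding a b x -> winding c d y ->
  proj_iso (oint a b) (std_atlas (oint a b)) (oint c d) (std_atlas (oint c d)) -> x = y.
Proof.
  intros [Hab Wx] [Hcd Wy] Hiso.
  assert (HD1 := model_carrier_oint a b Hab). assert (HD2 := model_carrier_oint c d Hcd).
  assert (Hiso' := proj_iso_models_sym _ _ HD1 HD2 Hiso).
  assert (Sp : forall n, spans n (oint a b) <-> spans n (oint c d))
    by (intros n; split; apply spans_proj_iso; assumption).
  destruct Wx as [[k1 [-> ->]]|[k1 [Hk1 ->]]]; destruct Wy as [[k2 [-> ->]]|[k2 [Hk2 ->]]].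
  - assert (Hk : forall n, (n < k1)%nat <-> (n < k2)%nat) by (intros n; rewrite <- !spans_oint_int; apply Sp).
    f_equal. destruct (Hk k1), (Hk k2). lia.
  - exfalso. assert (Hk : forall n, (n < k1)%nat <-> (n <= k2)%nat)
      by (intros n; rewrite <- (spans_oint_int a), <- (spans_oint_half c d k2); [apply Sp|lra]).
    destruct (Hk k2), (Hk k1), (Hk (S k2)). assert (k1 = S k2) by lia. subst k1.
    apply (not_two_classes_missed_oint_int a k2), (two_classes_missed_proj_iso (oint c d));
      [exact HD2|exact HD1|exact Hiso'|apply two_classes_missed_oint_half; lra].
  - exfalso. assert (Hk : forall n, (n <= k1)%nat <-> (n < k2)%nat)
      by (intros n; rewrite <- (spans_oint_int c), <- (spans_oint_half a b k1); [apply Sp|lra]).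
    destruct (Hk k1), (Hk k2), (Hk (S k1)). assert (k2 = S k1) by lia. subst k2.
    apply (not_two_classes_missed_oint_int c k1), (two_classes_missed_proj_iso (oint a b));
      [exact HD1|exact HD2|exact Hiso|apply two_classes_missed_oint_half; lra].
  - assert (Hk : forall n, (n <= k1)%nat <-> (n <= k2)%nat)
      by (intros n; rewrite <- (spans_oint_half a b k1), <- (spans_oint_half c d k2); [apply Sp|lra|lra]).
    destruct (Hk k1), (Hk k2). assert (k1 = k2) by lia. subst. reflexivity.
Qed.

Lemma winding_exists a b : a < b -> exists x, half_nat_pos x /\ winding a b x.
Proof.
  intros Hab. assert (HP := PI_RGT_0).
  destruct (floor_PI (b - a)) as [k [[Hk1|Hk1] Hk2]].
  all: assert (Hk0 : (0 <= k)%Z)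
         by (assert (-1 < IZR k) as ?%lt_IZR by (apply (Rmult_lt_reg_r PI); lra); lia).
  all: assert (Em : INR (Z.to_nat k) = IZR k) by (rewrite INR_IZR_INZ, Z2Nat.id; auto).
  - exists (INR (Z.to_nat k) + 1 / 2). split.
    + exists (2 * Z.to_nat k + 1)%nat. split; [lia|]. rewrite plus_INR, mult_INR. simpl. lra.
    + split; [exact Hab|]. right. exists (Z.to_nat k). split; [rewrite Em; lra|reflexivity].
  - exists (INR (Z.to_nat k)).
    assert (0 < IZR k) as ?%lt_IZR by (apply (Rmult_lt_reg_r PI); lra).
    split.
    + exists (2 * Z.to_nat k)%nat. split; [lia|]. rewrite mult_INR. simpl. lra.
    + split; [exact Hab|]. left. exists (Z.to_nat k). split; [rewrite Em; lra|reflexivity].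
Qed.

Lemma winding_of_half_nat_pos x : half_nat_pos x -> exists a b, winding a b x.
Proof.
  intros [n [Hn ->]]. assert (HP := PI_RGT_0).
  destruct (Nat.Even_or_Odd n) as [[m ->]|[m ->]].
  - exists 0, (INR m * PI). assert (1 <= INR m) by (apply (le_INR 1); lia).
    split; [nra|]. left. exists m. split; [ring|]. rewrite mult_INR. simpl. lra.
  - exists 0, ((INR m + 1 / 2) * PI). assert (0 <= INR m) by apply pos_INR.
    split; [nra|]. right. exists m. split; [split; nra|]. rewrite plus_INR, mult_INR. simpl. lra.
Qed.

Lemma proj_iso_oint_same_winding a b c d x : winding a b x -> winding c d x ->
  proj_iso (oint a b) (std_atlas (oint a b)) (oint c d) (std_atlas (oint c d)).
Proof.
  intros [Hab [[k1 [E1 X1]]|[k1 [E1 X1]]]] [Hcd [[k2 [E2 X2]]|[k2 [E2 X2]]]]; subst x.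
  - apply INR_eq in X2. subst k2.
    apply (proj_iso_translate _ _ (c - a)); intros t [H1 H2]; split; lra.
  - exfalso. assert (E : INR (2 * k1) = INR (2 * k2 + 1))
      by (rewrite mult_INR, plus_INR, mult_INR; simpl; lra).
    apply INR_eq in E. lia.
  - exfalso. assert (E : INR (2 * k2) = INR (2 * k1 + 1))
      by (rewrite mult_INR, plus_INR, mult_INR; simpl; lra).
    apply INR_eq in E. lia.
  - assert (INR k1 = INR k2) as E%INR_eq by lra. subst k2.
    apply (proj_iso_oint_half_winding a b c d k1); lra.
Qed.

(** * Developing maps *)

(* A developing map of the projective curve [(fullR, A)] over [I]: a continuous lift to the
   universal cover of RP^1 of a map that is, in every chart, locally a homography. *)
Definition developing (A : atlas) (h : R -> R) (I : R -> Prop) : Prop :=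
  (forall y, I y -> continuous h y) /\
  (forall U phi, A (U, phi) ->
     loc_proj (fun y => I y /\ U y) (fun y => (phi y, 1)) (fun y => dir (h y))).

Lemma developing_mono A h (I I' : R -> Prop) : (forall y, I' y -> I y) ->
  developing A h I -> developing A h I'.
Proof.
  intros Hs [Hc Hr]. split; [intros y Hy; apply Hc, Hs, Hy|].
  intros U phi HU. apply loc_proj_mono with (fun y => I y /\ U y); [|apply Hr, HU].
  intros y [H1 H2]. split; [apply Hs|]; assumption.
Qed.

Lemma developing_local A h (I : R -> Prop) : open I ->
  (forall x, I x -> exists e h1, 0 < e /\ developing A h1 (rball x e) /\
      forall y, I y -> rball x e y -> h y = h1 y) -> developing A h I.
Proof.
  intros HI H. split.
  - intros x Hx. destruct (H x Hx) as [e [h1 [He [[Hc _] E]]]].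
    apply (continuous_ext_open h1 h (fun y => I y /\ rball x e y) x).
    + apply open_and; [exact HI|apply open_rball].
    + split; [exact Hx|unfold rball; rewrite Rabs_minus_self; exact He].
    + intros y [Iy By]. symmetry. apply E; assumption.
    + apply Hc. unfold rball. rewrite Rabs_minus_self. exact He.
  - intros U phi HU x [Hx Ux]. destruct (H x Hx) as [e [h1 [He [[_ Hr] E]]]].
    destruct (Hr U phi HU x) as [e' [He' [M [HM K]]]];
      [split; [unfold rball; rewrite Rabs_minus_self; exact He|exact Ux]|].
    exists (Rmin e e'); split; [apply Rmin_pos; assumption|]. exists M; split; [exact HM|].
    intros y [Iy Uy] Hy.
    assert (Be : rball x e y) by (apply Rlt_le_trans with (1 := Hy), Rmin_l).
    rewrite E by assumption. apply K; [split; assumption|apply Rlt_le_trans with (1 := Hy), Rmin_r].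
Qed.

Lemma developing_union A h1 h2 (I J : R -> Prop) : open I -> open J ->
  developing A h1 I -> developing A h2 J -> (forall y, I y -> J y -> h1 y = h2 y) ->
  developing A (fun y => if excluded_middle_informative (I y) then h1 y else h2 y) (fun y => I y \/ J y).
Proof.
  intros HI HJ D1 D2 E. apply developing_local; [apply open_or; assumption|].
  intros x [Ix|Jx].
  - destruct (open_ball_incl I x HI Ix) as [e [He Hb]]. exists e, h1.
    split; [exact He|split; [apply developing_mono with (2 := D1); exact Hb|]].
    intros y _ By. destruct (excluded_middle_informative (I y)) as [Iy|NIy]; [reflexivity|].
    exfalso. apply NIy, Hb, By.
  - destruct (open_ball_incl J x HJ Jx) as [e [He Hb]]. exists e, h2.
    split; [exact He|split; [apply developing_mono with (2 := D2); exact Hb|]].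
    intros y _ By. destruct (excluded_middle_informative (I y)) as [Iy|NIy]; [|reflexivity].
    apply E; [exact Iy|apply Hb, By].
Qed.

Lemma developing_shift_PI A h I (j : Z) : developing A h I -> developing A (fun y => h y + IZR j * PI) I.
Proof.
  intros [Hc Hr]. split; [intros y Hy; apply cont_plus; [apply Hc, Hy|apply continuous_const]|].
  intros U phi HU. apply loc_proj_trans with (fun y => dir (h y)); [intros; apply nzvec_dir|apply Hr, HU|].
  apply (loc_proj_const _ _ _ mat1); [rewrite mdet_mat1; lra|].
  intros y _. rewrite mapply_mat1. apply collinear_dir_iff. exists j. ring.
Qed.

Lemma developing_opp A h I : developing A h I -> developing A (fun y => - h y) I.
Proof.
  intros [Hc Hr]. split; [intros y Hy; apply cont_opp, Hc, Hy|].
  intros U phi HU. apply loc_proj_trans with (fun y => dir (h y)); [intros; apply nzvec_dir|apply Hr, HU|].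
  apply (loc_proj_const _ _ _ (Mat 1 0 0 (-1))); [unfold mdet; simpl; lra|].
  intros y _. unfold collinear, cross, dir, mapply; simpl. rewrite cos_neg, sin_neg. ring.
Qed.

Section Developing.

Variable A : atlas.
Hypothesis HA : is_proj_atlas fullR A.

Lemma atlas_chart_injective U phi : A (U, phi) ->
  forall y1 y2, U y1 -> U y2 -> collinear (phi y1, 1) (phi y2, 1) -> y1 = y2.
Proof.
  intros HU y1 y2 U1 U2 P. destruct (proj1 HA U phi HU) as [_ [_ [_ Hi]]].
  apply Hi; [exact U1|exact U2|]. unfold collinear, cross in P; simpl in P. lra.
Qed.

Lemma atlas_chart_at x : exists U phi e, A (U, phi) /\ 0 < e /\ forall y, rball x e y -> U y.
Proof.
  destruct HA as [HA1 [HA2 _]]. destruct (HA2 x Logic.I) as [U [phi [HU Ux]]].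
  destruct (HA1 U phi HU) as [oU _]. destruct (open_ball_incl U x oU Ux) as [e [He Hb]].
  exists U, phi, e. split; [exact HU|split; [exact He|exact Hb]].
Qed.

Lemma atlas_chart_nondegenerate U phi (I : R -> Prop) : A (U, phi) -> (forall y, I y -> U y) ->
  nondegenerate I (fun y => (phi y, 1)).
Proof.
  intros HU HIU c d Hcd Hin.
  exists (c + (d - c) / 4), (c + 2 * (d - c) / 4), (c + 3 * (d - c) / 4).
  repeat split; try lra; intro P; apply (atlas_chart_injective U phi HU) in P; try lra;
    apply HIU, Hin; lra.
Qed.

Lemma developing_of_chart h (I : R -> Prop) U0 phi0 K : A (U0, phi0) -> (forall y, I y -> U0 y) ->
  (forall y, I y -> continuous h y) -> mdet K <> 0 ->
  (forall y, I y -> collinear (dir (h y)) (mapply K (phi0 y, 1))) -> developing A h I.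
Proof.
  intros H0 HIU Hc HK Hp. split; [exact Hc|].
  intros U phi HU. apply loc_proj_trans with (fun y => (phi0 y, 1)); [intros; apply nzvec_affine| |].
  - apply loc_proj_mono with (fun y => U y /\ U0 y); [intros y [Iy Uy]; split; [exact Uy|apply HIU, Iy]|].
    apply loc_homog_iff, (proj2 (proj2 HA)); assumption.
  - apply (loc_proj_const _ _ _ K HK). intros y [Iy _]. apply Hp, Iy.
Qed.

Lemma developing_loc_proj h1 h2 (I : R -> Prop) : developing A h1 I -> developing A h2 I ->
  loc_proj I (fun y => dir (h1 y)) (fun y => dir (h2 y)).
Proof.
  intros [_ R1] [_ R2]. apply loc_proj_local. intros x Hx.
  destruct (atlas_chart_at x) as [U [phi [e [HU [He Hb]]]]].
  exists e; split; [exact He|].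
  apply loc_proj_mono with (fun y => I y /\ U y); [intros y [Iy By]; split; [exact Iy|apply Hb, By]|].
  apply loc_proj_trans with (fun y => (phi y, 1)); [intros; apply nzvec_affine| |].
  - apply loc_proj_sym, R1, HU.
  - apply R2, HU.
Qed.

Lemma developing_chart_collinear h (I : R -> Prop) x : developing A h I -> I x ->
  exists U phi e M, A (U, phi) /\ 0 < e /\ mdet M <> 0 /\ forall y, I y -> rball x e y ->
    U y /\ collinear (dir (h y)) (mapply M (phi y, 1)).
Proof.
  intros [_ Hr] Hx. destruct (atlas_chart_at x) as [U [phi [e1 [HU [He1 Hb]]]]].
  destruct (Hr U phi HU x) as [e2 [He2 [M [HM K]]]];
    [split; [exact Hx|apply Hb; unfold rball; rewrite Rabs_minus_self; exact He1]|].
  exists U, phi, (Rmin e1 e2), M. split; [exact HU|split; [apply Rmin_pos; assumption|split; [exact HM|]]].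
  intros y Iy By. assert (Uy : U y) by (apply Hb, Rlt_le_trans with (1 := By), Rmin_l).
  split; [exact Uy|]. apply K; [split; assumption|apply Rlt_le_trans with (1 := By), Rmin_r].
Qed.

Lemma developing_locally_injective h (I : R -> Prop) : developing A h I -> locally_injective_on I h.
Proof.
  intros Dh x Ix. destruct (developing_chart_collinear h I x Dh Ix) as [U [phi [e [M [HU [He [HM K]]]]]]].
  exists e. split; [exact He|]. intros y1 y2 I1 I2 B1 B2 E.
  destruct (K y1 I1 B1) as [U1 P1]. destruct (K y2 I2 B2) as [U2 P2].
  apply (atlas_chart_injective U phi HU y1 y2 U1 U2), (collinear_mapply_inv M); [exact HM|].
  apply collinear_trans with (dir (h y1)); [apply nzvec_dir|apply collinear_sym, P1|].
  rewrite E. exact P2.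
Qed.

Lemma developing_nondegenerate h (I : R -> Prop) : developing A h I -> nondegenerate I (fun y => dir (h y)).
Proof.
  intros Dh c d Hcd Hin. set (m := (c + d) / 2).
  destruct (developing_chart_collinear h I m Dh) as [U [phi [e [M [HU [He [HM K]]]]]]];
    [apply Hin; unfold m; lra|].
  set (r := Rmin e ((d - c) / 2)).
  assert (r0 : 0 < r) by (apply Rmin_pos; lra).
  assert (r1 : r <= e) by apply Rmin_l. assert (r2 : r <= (d - c) / 2) by apply Rmin_r.
  assert (NP : forall y1 y2, Rabs (y1 - m) < r -> Rabs (y2 - m) < r -> y1 <> y2 ->
                 ~ collinear (dir (h y1)) (dir (h y2))).
  { intros y1 y2 B1 B2 N P. apply N.
    assert (I1 : I y1) by (apply Hin; apply Rabs_def2 in B1; unfold m in *; lra).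
    assert (I2 : I y2) by (apply Hin; apply Rabs_def2 in B2; unfold m in *; lra).
    destruct (K y1 I1) as [U1 P1]; [unfold rball; lra|]. destruct (K y2 I2) as [U2 P2]; [unfold rball; lra|].
    apply (atlas_chart_injective U phi HU y1 y2 U1 U2), (collinear_mapply_inv M); [exact HM|].
    apply collinear_trans with (dir (h y1)); [apply nzvec_dir|apply collinear_sym, P1|].
    apply collinear_trans with (dir (h y2)); [apply nzvec_dir|exact P|exact P2]. }
  exists (m - r / 2), m, (m + r / 2).
  assert (A1 : Rabs (m - r / 2 - m) < r) by (apply Rabs_def1; lra).
  assert (A2 : Rabs (m - m) < r) by (rewrite Rabs_minus_self; lra).
  assert (A3 : Rabs (m + r / 2 - m) < r) by (apply Rabs_def1; lra).
  unfold m in *. repeat split; try lra; apply NP; auto; lra.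
Qed.

(* Two developing maps over an interval differ by a projective map (rigidity); agreeing on a ball,
   that map is the identity there, hence [dir o h1] and [dir o h2] agree and so do the lifts. *)
Lemma developing_unique h1 h2 (I : R -> Prop) x0 d : is_interval I ->
  developing A h1 I -> developing A h2 I -> 0 < d -> (forall y, rball x0 d y -> I y) ->
  (forall y, rball x0 d y -> h1 y = h2 y) -> forall y, I y -> h1 y = h2 y.
Proof.
  intros HI D1 D2 Hd Hb E.
  assert (Ix0 : I x0) by (apply Hb; unfold rball; rewrite Rabs_minus_self; exact Hd).
  destruct (rigidity I (fun y => dir (h1 y)) (fun y => dir (h2 y)) x0 HI) as [N [HN K]];
    [intros; apply nzvec_dir|intros; apply nzvec_dir|apply developing_nondegenerate, D1
    |apply developing_loc_proj; assumption|exact Ix0|].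
  destruct (developing_nondegenerate h1 I D1 (x0 - d) (x0 + d))
    as [y1 [y2 [y3 [Y1 [Y2 [Y3 [N12 [N13 N23]]]]]]]];
    [lra|intros z Hz; apply Hb; unfold rball; apply Rabs_def1; lra|].
  assert (Pi : forall z, x0 - d < z < x0 + d ->
                 collinear (mapply mat1 (dir (h1 z))) (mapply N (dir (h1 z)))).
  { intros z Hz. assert (Bz : rball x0 d z) by (unfold rball; apply Rabs_def1; lra).
    rewrite mapply_mat1. rewrite (E z Bz) at 1. apply K, Hb, Bz. }
  assert (U := collinear_mapply_of_three mat1 N _ _ _ N12 N13 N23 (Pi y1 Y1) (Pi y2 Y2) (Pi y3 Y3)).
  apply (cong_pi_continuous_eq h1 h2 I x0 HI (proj1 D1) (proj1 D2));
    [|exact Ix0|apply E; unfold rball; rewrite Rabs_minus_self; exact Hd].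
  intros z Iz. apply cong_pi_sym, collinear_dir_iff.
  apply collinear_trans with (mapply N (dir (h1 z))); [apply nzvec_mapply, nzvec_dir; exact HN|apply K, Iz|].
  apply collinear_sym. rewrite <- (mapply_mat1 (dir (h1 z))) at 1. apply U.
Qed.

Lemma developing_near_chart P U phi e0 M : A (U, phi) -> 0 < e0 -> (forall y, rball P e0 y -> U y) ->
  mdet M <> 0 -> exists e th, 0 < e /\ e <= e0 /\ developing A th (rball P e) /\
    forall y, rball P e y -> collinear (dir (th y)) (mapply M (phi y, 1)).
Proof.
  intros HU He0 Hb HM. destruct (proj1 HA U phi HU) as [_ [_ [Cphi _]]].
  destruct (continuous_angle_near (fun y => fst (mapply M (phi y, 1)))
              (fun y => snd (mapply M (phi y, 1))) P e0 He0) as [e [th [He [Hee0 [Cth Pth]]]]].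
  - intros y Hy. assert (continuous phi y) by (apply Cphi, Hb, Hy).
    unfold mapply; cbn [fst snd]. split; solve_continuous; assumption.
  - apply (nzvec_mapply M (phi P, 1) HM (nzvec_affine _)).
  exists e, th. split; [exact He|split; [exact Hee0|]].
  assert (Hth : forall y, rball P e y -> collinear (dir (th y)) (mapply M (phi y, 1)))
    by (intros y Hy; rewrite (surjective_pairing (mapply M (phi y, 1))); apply Pth, Hy).
  split; [|exact Hth].
  apply (developing_of_chart th _ U phi M HU); [|exact Cth|exact HM|exact Hth].
  intros y Hy. apply Hb. unfold rball in *. lra.
Qed.

(* By rigidity, near the end point [P] of [I] the map [h] is the lift of one projective image of
   the chart at [P]; a continuous lift of that image over a ball around [P], shifted by the right
   multiple of [PI], extends [h]. *)
Lemma developing_extend h (I : R -> Prop) P : developing A h I -> is_interval I -> open I ->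
  (forall eps, 0 < eps -> exists y, I y /\ Rabs (y - P) < eps) ->
  exists e h', 0 < e /\ developing A h' (fun y => I y \/ rball P e y) /\ forall y, I y -> h' y = h y.
Proof.
  intros Dh HI oI Near. destruct (atlas_chart_at P) as [U [phi [e0 [HU [He0 Hb0]]]]].
  set (O := fun y => I y /\ rball P e0 y).
  destruct (Near e0 He0) as [x0 [Ix0 Bx0]].
  destruct (rigidity O (fun y => (phi y, 1)) (fun y => dir (h y)) x0) as [M [HM KM]].
  { apply is_interval_and; [exact HI|apply is_interval_rball]. }
  { intros; apply nzvec_affine. } { intros; apply nzvec_dir. }
  { apply (atlas_chart_nondegenerate U phi O HU). intros y [_ Hy]. apply Hb0, Hy. }
  { apply loc_proj_mono with (fun y => I y /\ U y); [intros y [Iy Hy]; split; [exact Iy|apply Hb0, Hy]|].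
    apply Dh, HU. }
  { split; assumption. }
  destruct (developing_near_chart P U phi e0 M HU He0 Hb0 HM) as [e1 [th [He1 [He10 [Dth Pth]]]]].
  destruct (Near e1 He1) as [y1 [Iy1 By1]].
  destruct (cong_pi_continuous_shift h th (fun y => I y /\ rball P e1 y) y1) as [j Hj].
  { apply is_interval_and; [exact HI|apply is_interval_rball]. }
  { intros y [Iy _]. apply Dh, Iy. } { intros y [_ By]. apply Dth, By. }
  { intros y [Iy By]. apply collinear_dir_iff, collinear_trans with (mapply M (phi y, 1)).
    - apply nzvec_mapply, nzvec_affine; exact HM.
    - apply KM. split; [exact Iy|unfold rball in *; lra].
    - apply collinear_sym, Pth, By. }
  { split; assumption. }
  exists e1, (fun y => if excluded_middle_informative (I y) then h y else th y + IZR j * PI).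
  split; [exact He1|split].
  - apply developing_union; [exact oI|apply open_rball|exact Dh|apply developing_shift_PI, Dth|].
    intros y Iy By. apply Hj. split; assumption.
  - intros y Iy. destruct (excluded_middle_informative (I y)) as [_|N]; [reflexivity|contradiction].
Qed.

Section GlobalDeveloping.

Variables (h0 : R -> R) (T0 : R).
Hypotheses (HT0 : 0 < T0) (D0 : developing A h0 (rball 0 T0)).

(* Agreeing with [h0] near [0] fixes the multiple of [PI] up to which a lift is determined. *)
Definition normalized (h : R -> R) (T : R) : Prop :=
  developing A h (rball 0 T) /\ forall y, rball 0 T0 y -> h y = h0 y.

Lemma normalized_mono h T t : t <= T -> normalized h T -> normalized h t.
Proof.
  intros Ht [Dh Eh]. split; [|exact Eh].
  apply developing_mono with (2 := Dh). unfold rball. intros y Hy. lra.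
Qed.

Lemma normalized_agree h1 h2 T1 T2 : normalized h1 T1 -> normalized h2 T2 ->
  forall y, rball 0 (Rmin T1 T2) y -> h1 y = h2 y.
Proof.
  intros [N1 E1] [N2 E2] y Hy. set (T := Rmin T1 T2) in *.
  assert (HT : 0 < T) by (unfold rball in Hy; pose proof (Rabs_pos (y - 0)); lra).
  assert (T1T : T <= T1) by apply Rmin_l. assert (T2T : T <= T2) by apply Rmin_r.
  apply (developing_unique h1 h2 (rball 0 T) 0 (Rmin T0 T) (is_interval_rball 0 T));
    [| |apply Rmin_pos; assumption| | |exact Hy]; unfold rball.
  - apply developing_mono with (2 := N1). unfold rball. intros z Hz. lra.
  - apply developing_mono with (2 := N2). unfold rball. intros z Hz. lra.
  - intros z Hz. apply Rlt_le_trans with (1 := Hz), Rmin_r.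
  - intros z Hz. assert (B : rball 0 T0 z) by (apply Rlt_le_trans with (1 := Hz), Rmin_l).
    rewrite E1, E2 by exact B. reflexivity.
Qed.

(* The value at [y] of any normalized developing map defined near [y]; they all agree. *)
Definition glued (y : R) : R :=
  epsilon (inhabits 0) (fun v => exists h T, normalized h T /\ rball 0 T y /\ h y = v).

Lemma glued_agree h T : normalized h T -> forall y, rball 0 T y -> glued y = h y.
Proof.
  intros Nh y Hy. unfold glued.
  destruct (epsilon_spec (inhabits 0) (fun v => exists h T, normalized h T /\ rball 0 T y /\ h y = v))
    as [h' [T' [Nh' [Hy' <-]]]]; [exists (h y), h, T; split; [exact Nh|split; [exact Hy|reflexivity]]|].
  apply (normalized_agree h' h T' T Nh' Nh). unfold rball in *. apply Rmin_glb_lt; assumption.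
Qed.

Lemma glued_normalized T : (forall t, t < T -> exists h, normalized h t) -> normalized glued T.
Proof.
  intros Below. split.
  - apply developing_local; [apply open_rball|]. intros x Hx. unfold rball in Hx.
    destruct (Below ((Rabs (x - 0) + T) / 2)) as [h Nh]; [lra|].
    exists ((T - Rabs (x - 0)) / 2), h. split; [lra|split].
    + apply developing_mono with (2 := proj1 Nh). unfold rball. intros y Hy.
      assert (Rabs (y - 0) <= Rabs (y - x) + Rabs (x - 0))
        by (replace (y - 0) with ((y - x) + (x - 0)) by ring; apply Rabs_triang). lra.
    + intros y _ Hy. apply (glued_agree h _ Nh). unfold rball in *.
      assert (Rabs (y - 0) <= Rabs (y - x) + Rabs (x - 0))
        by (replace (y - 0) with ((y - x) + (x - 0)) by ring; apply Rabs_triang). lra.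
  - intros y Hy. apply (glued_agree h0 T0); [split; [exact D0|reflexivity]|exact Hy].
Qed.

Lemma normalized_extend h T : T0 <= T -> normalized h T -> exists h' T', T < T' /\ normalized h' T'.
Proof.
  intros HT [Dh Eh].
  destruct (developing_extend h (rball 0 T) T Dh (is_interval_rball 0 T) (open_rball 0 T))
    as [e1 [h1 [He1 [D1 E1]]]].
  { intros eps Heps. exists (T - Rmin eps T / 2).
    assert (0 < Rmin eps T) by (apply Rmin_pos; lra).
    assert (Rmin eps T <= eps) by apply Rmin_l. assert (Rmin eps T <= T) by apply Rmin_r.
    unfold rball. split; apply Rabs_def1; lra. }
  set (e := Rmin e1 T). assert (He : 0 < e) by (apply Rmin_pos; lra).
  assert (e1e : e <= e1) by apply Rmin_l.
  assert (D1' : developing A h1 (oint (- T) (T + e))).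
  { apply developing_mono with (2 := D1). unfold oint, rball. intros y Hy.
    destruct (Rlt_le_dec y T); [left|right]; apply Rabs_def1; lra. }
  destruct (developing_extend h1 (oint (- T) (T + e)) (- T) D1' (is_interval_oint _ _) (open_oint _ _))
    as [e2 [h2 [He2 [D2 E2]]]].
  { intros eps Heps. exists (- T + Rmin eps T / 2).
    assert (0 < Rmin eps T) by (apply Rmin_pos; lra).
    assert (Rmin eps T <= eps) by apply Rmin_l. assert (Rmin eps T <= T) by apply Rmin_r.
    unfold oint. split; [split; lra|apply Rabs_def1; lra]. }
  assert (m0 : 0 < Rmin e e2) by (apply Rmin_pos; lra).
  assert (m1 : Rmin e e2 <= e) by apply Rmin_l. assert (m2 : Rmin e e2 <= e2) by apply Rmin_r.
  exists h2, (T + Rmin e e2 / 2). split; [lra|split].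
  - apply developing_mono with (2 := D2). unfold rball, oint. intros y Hy. apply Rabs_def2 in Hy.
    destruct (Rlt_le_dec (- T) y); [left; lra|right; apply Rabs_def1; lra].
  - intros y Hy. assert (Iy : rball 0 T y) by (unfold rball in *; lra).
    rewrite E2, E1, Eh; [reflexivity|exact Hy|exact Iy|].
    unfold rball, oint in *. apply Rabs_def2 in Iy. lra.
Qed.

Lemma normalized_exists T : exists h, normalized h T.
Proof.
  revert T. apply (continuation_principle (fun T => exists h, normalized h T) T0).
  - intros t Ht. exists h0. apply (normalized_mono h0 T0); [exact Ht|split; [exact D0|reflexivity]].
  - intros T HT Below. destruct (normalized_extend glued T HT (glued_normalized T Below))
      as [h' [T' [HT' Nh']]].
    exists (T' - T). split; [lra|]. intros t Ht. exists h'. apply (normalized_mono h' T'); [lra|exact Nh'].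
Qed.

Lemma glued_developing : developing A glued fullR.
Proof.
  apply developing_local; [apply open_full|]. intros x _.
  exists 1, glued. split; [lra|split; [|reflexivity]].
  apply developing_mono with (rball 0 (Rabs (x - 0) + 2)).
  - unfold rball. intros y Hy.
    assert (Rabs (y - 0) <= Rabs (y - x) + Rabs (x - 0))
      by (replace (y - 0) with ((y - x) + (x - 0)) by ring; apply Rabs_triang). lra.
  - apply glued_normalized. intros t _. apply normalized_exists.
Qed.

End GlobalDeveloping.

Lemma developing_exists : exists h, developing A h fullR.
Proof.
  destruct (atlas_chart_at 0) as [U0 [phi0 [e0 [HU0 [He0 Hb0]]]]].
  destruct (developing_near_chart 0 U0 phi0 e0 mat1 HU0 He0 Hb0) as [T0 [h0 [HT0 [_ [D0 _]]]]];
    [rewrite mdet_mat1; lra|].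
  exists (glued h0 T0). apply glued_developing; assumption.
Qed.

End Developing.

(** * Classification *)

Lemma developing_increasing_exists A : is_proj_atlas fullR A ->
  exists h, developing A h fullR /\ incr_on fullR h.
Proof.
  intros HA. destruct (developing_exists A HA) as [h Dh].
  assert (Hinj : injective_on fullR h)
    by (apply locally_injective_injective;
        [apply is_interval_full|apply Dh|apply (developing_locally_injective A HA), Dh]).
  destruct (injective_on_monotone fullR h is_interval_full (proj1 Dh) Hinj) as [I|I].
  - exists h. split; assumption.
  - exists (fun y => - h y). split; [apply developing_opp, Dh|].
    intros x y Hx Hy Hxy. assert (h y < h x) by (apply I; assumption). lra.
Qed.

(* For continuous [h]: [D] is the range of [h], and it contains neither its infimum nor its
   supremum. *)
Definition open_range (h : R -> R) (D : R -> Prop) : Prop :=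
  (forall y, D (h y)) /\ (forall s, D s -> (exists y1, h y1 < s) /\ (exists y2, s < h y2)).

Section IncreasingMap.

Variable h : R -> R.
Hypotheses (Hc : forall y, continuous h y) (Hi : incr_on fullR h).

Lemma incr_full_lt x y : x < y -> h x < h y.
Proof. apply Hi; exact Logic.I. Qed.

Lemma increasing_between_hit s y1 y2 : h y1 < s -> s < h y2 -> exists y, h y = s.
Proof.
  intros H1 H2. assert (y1 < y2) by (apply (incr_on_full_reflect h); [exact Hi|lra]).
  destruct (ivt_interval h y1 y2 s) as [c [_ Hc2]]; [lra|intros; apply Hc|left; lra|].
  exists c. exact Hc2.
Qed.

Lemma homeomorphism_of_increasing D : open_range h D ->
  exists g, homeomorphism fullR D h g.
Proof.
  intros [HD HS].
  set (g := fun s => epsilon (inhabits 0) (fun y => h y = s)).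
  assert (Gs : forall s y1 y2, h y1 < s -> s < h y2 -> h (g s) = s)
    by (intros s y1 y2 H1 H2; apply epsilon_spec, (increasing_between_hit s y1 y2 H1 H2)).
  assert (Hinj : forall x y, h x = h y -> x = y).
  { intros x y E. destruct (Rtotal_order x y) as [L|[L|L]]; [|exact L|];
      apply incr_full_lt in L; lra. }
  exists g.
  refine (conj (fun y _ => HD y) (conj (fun _ _ => Logic.I) (conj _ (conj _ (conj (fun x _ => Hc x) _))))).
  - intros x _. apply Hinj, (Gs (h x) (x - 1) (x + 1)); apply incr_full_lt; lra.
  - intros s Ds. destruct (HS s Ds) as [[y1 H1] [y2 H2]]. apply (Gs s y1 y2); assumption.
  - intros s Ds. apply eps_continuous. intros eps Heps.
    destruct (HS s Ds) as [[y1 H1] [y2 H2]].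
    assert (Ey : h (g s) = s) by (apply (Gs s y1 y2); assumption).
    assert (L1 : h (g s - eps) < s) by (rewrite <- Ey at 2; apply incr_full_lt; lra).
    assert (L2 : s < h (g s + eps)) by (rewrite <- Ey at 1; apply incr_full_lt; lra).
    exists (Rmin (s - h (g s - eps)) (h (g s + eps) - s)). split; [apply Rmin_pos; lra|].
    intros s' Hs'. apply Rabs_def2 in Hs'.
    assert (Rmin (s - h (g s - eps)) (h (g s + eps) - s) <= s - h (g s - eps)) by apply Rmin_l.
    assert (Rmin (s - h (g s - eps)) (h (g s + eps) - s) <= h (g s + eps) - s) by apply Rmin_r.
    assert (E' : h (g s') = s') by (apply (Gs s' (g s - eps) (g s + eps)); lra).
    apply Rabs_def1; apply Rnot_le_lt; intro L;
      [assert (h (g s + eps) <= h (g s')) | assert (h (g s') <= h (g s - eps))];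
      try (destruct L as [L|L]; [left; apply incr_full_lt; lra|right; f_equal; lra]); lra.
Qed.

End IncreasingMap.

Lemma proj_iso_of_developing A h D : developing A h fullR -> incr_on fullR h -> open_range h D ->
  proj_iso fullR A D (std_atlas D).
Proof.
  intros Dh Hi HD.
  destruct (homeomorphism_of_increasing h (fun y => proj1 Dh y Logic.I) Hi D HD)
    as [g [H1 [H2 [H3 [H4 [H5 H6]]]]]].
  exists h, g. do 6 (split; [assumption|]).
  intros U phi V psi HU HV. apply loc_homog_iff.
  apply loc_proj_trans with (fun y => dir (h y)); [intros; apply nzvec_dir| |].
  - apply loc_proj_mono with (fun y => fullR y /\ U y); [intros y [Uy _]; split; [exact Logic.I|exact Uy]|].
    apply Dh, HU.
  - apply (std_chart_loc_proj D V psi); [exact HV|tauto].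
Qed.

Lemma increasing_sup h : incr_on fullR h -> (exists m, forall y, h y <= m) ->
  exists b, (forall y, h y < b) /\ forall s, s < b -> exists y, s < h y.
Proof.
  intros Hi [m Hm]. set (E := fun x => exists y, x = h y).
  destruct (completeness E) as [b [Hb1 Hb2]];
    [exists m; intros x [y ->]; apply Hm|exists (h 0), 0; reflexivity|].
  exists b. split.
  - intros y. apply Rlt_le_trans with (h (y + 1)); [apply Hi; [exact Logic.I|exact Logic.I|lra]|].
    apply Hb1. exists (y + 1). reflexivity.
  - intros s Hs. apply NNPP; intro N. assert (b <= s); [|lra]. apply Hb2. intros x [y ->].
    destruct (Rle_lt_dec (h y) s) as [L|L]; [exact L|exfalso; apply N; exists y; exact L].
Qed.

Lemma increasing_inf h : incr_on fullR h -> (exists m, forall y, m <= h y) ->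
  exists a, (forall y, a < h y) /\ forall s, a < s -> exists y, h y < s.
Proof.
  intros Hi [m Hm].
  destruct (increasing_sup (fun y => - h (- y))) as [b [Hb1 Hb2]].
  - intros x y _ _ Hxy. assert (h (- y) < h (- x)) by (apply Hi; [exact Logic.I|exact Logic.I|lra]). lra.
  - exists (- m). intros y. specialize (Hm (- y)). lra.
  - exists (- b). split.
    + intros y. specialize (Hb1 (- y)). rewrite Ropp_involutive in Hb1. lra.
    + intros s Hs. destruct (Hb2 (- s)) as [y Hy]; [lra|]. exists (- y). lra.
Qed.

Lemma increasing_range_cases h : incr_on fullR h ->
  open_range h fullR \/ (exists a, open_range h (above a)) \/ (exists b, open_range h (below b)) \/
  (exists a b, a < b /\ open_range h (oint a b)).
Proof.
  intros Hi.
  assert (Up : ~ (exists m, forall y, h y <= m) -> forall s, exists y, s < h y).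
  { intros N s. apply NNPP; intro N'. apply N. exists s. intros y.
    destruct (Rle_lt_dec (h y) s) as [L|L]; [exact L|exfalso; apply N'; exists y; exact L]. }
  assert (Down : ~ (exists m, forall y, m <= h y) -> forall s, exists y, h y < s).
  { intros N s. apply NNPP; intro N'. apply N. exists s. intros y.
    destruct (Rle_lt_dec s (h y)) as [L|L]; [exact L|exfalso; apply N'; exists y; exact L]. }
  destruct (classic (exists m, forall y, h y <= m)) as [BU|NBU];
  destruct (classic (exists m, forall y, m <= h y)) as [BL|NBL].
  - destruct (increasing_sup h Hi BU) as [b [Hb1 Hb2]]. destruct (increasing_inf h Hi BL) as [a [Ha1 Ha2]].
    right; right; right. exists a, b. split; [specialize (Ha1 0); specialize (Hb1 0); lra|].
    split; [intros y; split; [apply Ha1|apply Hb1]|intros s [Hs1 Hs2]; split; auto].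
  - destruct (increasing_sup h Hi BU) as [b [Hb1 Hb2]]. right; right; left. exists b.
    split; [exact Hb1|intros s Hs; split; [apply Down, NBL|apply Hb2, Hs]].
  - destruct (increasing_inf h Hi BL) as [a [Ha1 Ha2]]. right; left. exists a.
    split; [exact Ha1|intros s Hs; split; [apply Ha2, Hs|apply Up, NBU]].
  - left. split; [intros; exact Logic.I|intros s _; split; [apply Down, NBL|apply Up, NBU]].
Qed.

(* A developing map is injective, hence may be taken increasing; it is then an isomorphism onto
   its range, which is an open interval. *)
Lemma proj_curve_classification A : is_proj_atlas fullR A ->
  proj_iso fullR A fullR (std_atlas fullR) \/
  (exists a, proj_iso fullR A (above a) (std_atlas (above a))) \/
  (exists b, proj_iso fullR A (below b) (std_atlas (below b))) \/
  (exists a b, a < b /\ proj_iso fullR A (oint a b) (std_atlas (oint a b))).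
Proof.
  intros HA. destruct (developing_increasing_exists A HA) as [h [Dh Hi]].
  destruct (increasing_range_cases h Hi) as [HD|[[a HD]|[[b HD]|[a [b [Hab HD]]]]]];
    [left|right; left; exists a|right; right; left; exists b|right; right; right; exists a, b; split; [exact Hab|]];
    apply (proj_iso_of_developing A h); assumption.
Qed.

Theorem mainTheorem7 :
  (* the models are open projective curves *)
  is_proj_atlas fullR (std_atlas fullR) /\
  (forall a, is_proj_atlas (above a) (std_atlas (above a))) /\
  (forall b, is_proj_atlas (below b) (std_atlas (below b))) /\
  (forall a b, a < b -> is_proj_atlas (oint a b) (std_atlas (oint a b))) /\
  (* every bounded interval has a winding number in (1/2)N^*, and every
     x in (1/2)N^* is the winding number of some bounded interval *)
  (forall a b, a < b -> exists x, half_nat_pos x /\ winding a b x) /\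
  (forall x, half_nat_pos x -> exists a b, winding a b x) /\
  (* every connected open projective curve is isomorphic to a model *)
  (forall A : atlas, is_proj_atlas fullR A ->
     proj_iso fullR A fullR (std_atlas fullR) \/
     (exists a, proj_iso fullR A (above a) (std_atlas (above a))) \/
     (exists b, proj_iso fullR A (below b) (std_atlas (below b))) \/
     (exists a b, a < b /\ proj_iso fullR A (oint a b) (std_atlas (oint a b)))) /\
  (* H: all half-lines are isomorphic *)
  (forall a a', proj_iso (above a) (std_atlas (above a)) (above a') (std_atlas (above a'))) /\
  (forall a b, proj_iso (above a) (std_atlas (above a)) (below b) (std_atlas (below b))) /\
  (forall b b', proj_iso (below b) (std_atlas (below b)) (below b') (std_atlas (below b'))) /\
  (* bounded intervals with the same winding number are isomorphic *)
  (forall a b c d x, winding a b x -> winding c d x ->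
     proj_iso (oint a b) (std_atlas (oint a b)) (oint c d) (std_atlas (oint c d))) /\
  (* the models are pairwise non-isomorphic *)
  (forall a, ~ proj_iso fullR (std_atlas fullR) (above a) (std_atlas (above a))) /\
  (forall b, ~ proj_iso fullR (std_atlas fullR) (below b) (std_atlas (below b))) /\
  (forall a b, a < b -> ~ proj_iso fullR (std_atlas fullR) (oint a b) (std_atlas (oint a b))) /\
  (forall a c d, c < d -> ~ proj_iso (above a) (std_atlas (above a)) (oint c d) (std_atlas (oint c d))) /\
  (forall b c d, c < d -> ~ proj_iso (below b) (std_atlas (below b)) (oint c d) (std_atlas (oint c d))) /\
  (forall a b c d x y, winding a b x -> winding c d y ->
     proj_iso (oint a b) (std_atlas (oint a b)) (oint c d) (std_atlas (oint c d)) -> x = y).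
Proof.
  split; [apply std_proj_atlas, open_full|].
  split; [intros a; apply std_proj_atlas, open_above|].
  split; [intros b; apply std_proj_atlas, open_below|].
  split; [intros a b _; apply std_proj_atlas, open_oint|].
  split; [exact winding_exists|].
  split; [exact winding_of_half_nat_pos|].
  split; [exact proj_curve_classification|].
  split; [intros a a'; apply (proj_iso_translate _ _ (a' - a)); unfold above; intros; lra|].
  split; [intros a b; apply (proj_iso_reflect _ _ (a + b)); unfold above, below; intros; lra|].
  split; [intros b b'; apply (proj_iso_translate _ _ (b' - b)); unfold below; intros; lra|].
  split; [exact proj_iso_oint_same_winding|].
  split; [intros a; apply not_proj_iso_full_half; [apply model_carrier_above|apply above_not_two_sided]|].
  split; [intros b; apply not_proj_iso_full_half; [apply model_carrier_below|apply below_not_two_sided]|].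
  split; [intros a b Hab; apply not_proj_iso_oint_of_spans; [apply model_carrier_full|exact Hab|apply spans_full]|].
  split; [intros a c d Hcd; apply not_proj_iso_oint_of_spans; [apply model_carrier_above|exact Hcd|apply spans_above]|].
  split; [intros b c d Hcd; apply not_proj_iso_oint_of_spans; [apply model_carrier_below|exact Hcd|apply spans_below]|].
  exact winding_unique.
Qed.
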